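(* Let $(X,\mathbb{A},d)$ be a forward complete $C^*$-algebra valued asymmetric metric space and let $T:X\to X$ be a forward $C^*$-valued contractive type mapping, i.e. there exist $x\in X$ and $a\in\mathbb{A}$ with $\|a\|<1$ such that $d(Ty,T^2y)\preceq a^*\,d(y,Ty)\,a$ for every $y\in\mathcal{O}_T(x)$. Then: (1) there exists $x_0\in X$ such that the sequence $\{T^nx\}_{n}$ forward converges to $x_0$ with respect to $\mathbb{A}$; (2) $x_0$ is a fixed point of $T$ if and only if the map $G:X\to\mathbb{A}$, $G(z)=d(z,Tz)$, is forward $T$-orbitally lower semicontinuous at $x_0$ with respect to $\mathbb{A}$.
   Context: $\mathbb{A}$ is a unital $C^*$-algebra with unit $I_{\mathbb{A}}$ and zero $0_{\mathbb{A}}$; $\mathbb{A}^+$ denotes its positive elements and, for self-adjoint $a,b$, $a\preceq b$ means $b-a\in\mathbb{A}^+$. $\epsilon\succ 0_{\mathbb{A}}$ means $\epsilon\in\mathbb{A}^+$ is invertible (equivalently $\epsilon\succeq\delta I_{\mathbb{A}}$ for some real $\delta>0$). A $C^*$-algebra valued asymmetric metric on a nonempty set $X$ is a map $d:X\times X\to\mathbb{A}$ such that (i) $0_{\mathbb{A}}\preceq d(x,y)$ for all $x,y$, and $d(x,y)=0_{\mathbb{A}}$ iff $x=y$; (ii) $d(x,y)\preceq d(x,z)+d(z,y)$ for all $x,y,z$ (symmetry not required); $(X,\mathbb{A},d)$ is then a $C^*$-algebra valued asymmetric metric space. A sequence $\{x_n\}$ forward converges to $x$ if for every $\epsilon\succ0_{\mathbb{A}}$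 there is $k$ with $d(x,x_n)\preceq\epsilon$ for all $n\ge k$. $\{x_n\}$ is forward Cauchy if for every $\epsilon\succ0_{\mathbb{A}}$ there is $k$ with $d(x_p,x_n)\preceq\epsilon$ for all $n>p\ge k$. $X$ is forward complete if every forward Cauchy sequence forward converges to some point of $X$. For $x\in X$, the orbit is $\mathcal{O}_T(x)=\{T^nx: n\in\mathbb{N}\}$. A function $G:X\to\mathbb{A}$ is forward $T$-orbitally lower semicontinuous at $x_0$ (with respect to $\mathbb{A}$) if for every sequence $\{x_n\}$ in $\mathcal{O}_T(x)$ that forward converges to $x_0$ one has $\|G(x_0)\|\le\liminf_{n\to\infty}\|G(x_n)\|$. *)

From Stdlib Require Import Reals.
From Coquelicot Require Import Coquelicot.
Open Scope R_scope.

Record CStarAlgebra := {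
  car :> Type;
  c0 : car;
  c1 : car;
  cadd : car -> car -> car;
  copp : car -> car;
  cmul : car -> car -> car;
  cscal : C -> car -> car;
  cstar : car -> car;
  cnorm : car -> R;
  cadd_assoc : forall a b c, cadd a (cadd b c) = cadd (cadd a b) c;
  cadd_comm : forall a b, cadd a b = cadd b a;
  cadd_0l : forall a, cadd c0 a = a;
  cadd_oppl : forall a, cadd (copp a) a = c0;
  cmul_assoc : forall a b c, cmul a (cmul b c) = cmul (cmul a b) c;
  cmul_1l : forall a, cmul c1 a = a;
  cmul_1r : forall a, cmul a c1 = a;
  cmul_addl : forall a b c, cmul (cadd a b) c = cadd (cmul a c) (cmul b c);
  cmul_addr : forall a b c, cmul a (cadd b c) = cadd (cmul a b) (cmul a c);
  cscal_1 : forall a, cscal (RtoC 1) a = a;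
  cscal_mul : forall l m a, cscal (Cmult l m) a = cscal l (cscal m a);
  cscal_addl : forall l m a, cscal (Cplus l m) a = cadd (cscal l a) (cscal m a);
  cscal_addr : forall l a b, cscal l (cadd a b) = cadd (cscal l a) (cscal l b);
  cscal_mull : forall l a b, cscal l (cmul a b) = cmul (cscal l a) b;
  cscal_mulr : forall l a b, cscal l (cmul a b) = cmul a (cscal l b);
  cstar_invol : forall a, cstar (cstar a) = a;
  cstar_add : forall a b, cstar (cadd a b) = cadd (cstar a) (cstar b);
  cstar_mul : forall a b, cstar (cmul a b) = cmul (cstar b) (cstar a);
  cstar_scal : forall l a, cstar (cscal l a) = cscal (Cconj l) (cstar a);
  cnorm_eq0 : forall a, cnorm a = 0 -> a = c0;
  cnorm_triangle : forall a b, cnorm (cadd a b) <= cnorm a + cnorm b;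
  cnorm_scal : forall l a, cnorm (cscal l a) = Cmod l * cnorm a;
  cnorm_submult : forall a b, cnorm (cmul a b) <= cnorm a * cnorm b;
  ccomplete : forall u : nat -> car,
    (forall eps, 0 < eps -> exists N, forall m n, (N <= m)%nat -> (N <= n)%nat ->
        cnorm (cadd (u m) (copp (u n))) < eps) ->
    exists l, forall eps, 0 < eps -> exists N, forall n, (N <= n)%nat ->
        cnorm (cadd (u n) (copp l)) < eps;
  cstar_identity : forall a, cnorm (cmul (cstar a) a) = cnorm a * cnorm a
}.

Section Order.
Variable A : CStarAlgebra.

Definition csub (a b : A) : A := cadd A a (copp A b).

Definition cinvertible (a : A) : Prop :=
  exists b : A, cmul A a b = c1 A /\ cmul A b a = c1 A.

Definition cpos (a : A) : Prop :=
  cstar A a = a /\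
  forall l : C, ~ cinvertible (csub a (cscal A l (c1 A))) -> Im l = 0 /\ 0 <= Re l.

Definition cle (a b : A) : Prop := cpos (csub b a).

Definition cgt0 (e : A) : Prop := cpos e /\ cinvertible e.
End Order.

Arguments csub {A}. Arguments cinvertible {A}. Arguments cpos {A}.
Arguments cle {A}. Arguments cgt0 {A}.

Definition asym_metric {X : Type} (A : CStarAlgebra) (d : X -> X -> A) : Prop :=
  (forall x y, cle (c0 A) (d x y)) /\
  (forall x y, d x y = c0 A <-> x = y) /\
  (forall x y z, cle (d x y) (cadd A (d x z) (d z y))).

Definition forward_conv {X : Type} {A : CStarAlgebra} (d : X -> X -> A)
  (u : nat -> X) (x : X) : Prop :=
  forall e : A, cgt0 e -> exists k, forall n, (k <= n)%nat -> cle (d x (u n)) e.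

Definition forward_cauchy {X : Type} {A : CStarAlgebra} (d : X -> X -> A)
  (u : nat -> X) : Prop :=
  forall e : A, cgt0 e -> exists k, forall n p, (k <= p)%nat -> (p < n)%nat ->
    cle (d (u p) (u n)) e.

Definition forward_complete {X : Type} {A : CStarAlgebra} (d : X -> X -> A) : Prop :=
  forall u : nat -> X, forward_cauchy d u -> exists x, forward_conv d u x.

Definition orbit {X : Type} (T : X -> X) (x : X) (y : X) : Prop :=
  exists n : nat, y = Nat.iter n T x.

Definition forward_orbitally_lsc {X : Type} {A : CStarAlgebra} (d : X -> X -> A)
  (T : X -> X) (x : X) (G : X -> A) (x0 : X) : Prop :=
  forall u : nat -> X, (forall n, orbit T x (u n)) -> forward_conv d u x0 ->
    Rbar_le (Finite (cnorm A (G x0))) (LimInf_seq (fun n => cnorm A (G (u n)))).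

(** With q = ||a||^2 < 1,
    the contraction hypothesis and the monotonicity of the norm on positive
    elements give ||d(T^n x, T^(n+1) x)|| <= q^n ||d(x, T x)||; the triangle
    inequality then bounds d(T^p x, T^n x) by a scalar multiple of the unit
    which is eventually below any strictly positive element, so the orbit is
    forward Cauchy and converges to some x0.  Finally G(T^n x) -> 0, so lower
    semicontinuity of G at x0 is equivalent to G(x0) = d(x0, T x0) = 0.

    The work lies in the order.  Positivity is defined spectrally (self-adjoint
    with spectrum in [0, +oo)), so already transitivity of the order -- a sum of
    positive elements is positive -- needs the fact that the norm of a
    self-adjoint element is bounded by its spectral radius.  We derive it from
    the axioms only: Neumann series and perturbation of inverses; the averaging
    identity (1 - z^N)^-1 = 1/N sum_k (1 - w^k z)^-1 over the N-th roots of
    unity w^k; uniform boundedness of the resolvent on a compact disc; and a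
    dyadic argument showing (1 - (r h)^(2^n))^-1 -> 1 for r in that disc, which
    with ||h^(2^n)|| = ||h||^(2^n) (C*-identity) gives r ||h|| <= 1.  The order
    facts used by the fixed point argument follow, and the theorem comes last. *)

From Pilot Require Import Defs.
From Stdlib Require Import Reals Lra Lia ClassicalEpsilon Classical.
From Coquelicot Require Import Coquelicot.
Open Scope R_scope.

Section CStar.
Variable A : CStarAlgebra.

Local Notation "x ⊕ y" := (cadd A x y) (at level 50, left associativity).
Local Notation "x ⊗ y" := (cmul A x y) (at level 40, left associativity).
Local Notation "⊖ x" := (copp A x) (at level 35, right associativity).
Local Notation "x ⊖ y" := (cadd A x (copp A y)) (at level 50, left associativity).
Local Notation "𝟘" := (Defs.c0 A).
Local Notation "𝟙" := (Defs.c1 A).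
Local Notation "x ⋆" := (cstar A x) (at level 2, format "x ⋆").
Local Notation nm := (cnorm A).
Local Notation "l ⊙ x" := (cscal A l x) (at level 40).

Lemma add0r (x : A) : 𝟘 ⊕ x = x.  Proof. apply cadd_0l. Qed.
Lemma addr0 (x : A) : x ⊕ 𝟘 = x.  Proof. rewrite cadd_comm; apply cadd_0l. Qed.
Lemma addNr (x : A) : ⊖ x ⊕ x = 𝟘. Proof. apply cadd_oppl. Qed.
Lemma addrN (x : A) : x ⊖ x = 𝟘. Proof. rewrite cadd_comm; apply cadd_oppl. Qed.
Lemma addrA (x y z : A) : x ⊕ (y ⊕ z) = x ⊕ y ⊕ z. Proof. apply cadd_assoc. Qed.
Lemma addrC (x y : A) : x ⊕ y = y ⊕ x. Proof. apply cadd_comm. Qed.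
Lemma addKr (x y : A) : ⊖ x ⊕ (x ⊕ y) = y.
Proof. rewrite addrA, addNr, add0r; reflexivity. Qed.
Lemma addrNK (x y : A) : x ⊖ y ⊕ y = x.
Proof. rewrite <- addrA, addNr, addr0; reflexivity. Qed.
Lemma addIr (a x y : A) : a ⊕ x = a ⊕ y -> x = y.
Proof. intro H. rewrite <- (addKr a x), H, addKr. reflexivity. Qed.
Lemma oppK (x : A) : ⊖ ⊖ x = x.
Proof. apply (addIr (⊖ x)). rewrite addrN, addNr. reflexivity. Qed.
Lemma opp0 : ⊖ 𝟘 = 𝟘.
Proof. rewrite <- (add0r (⊖ 𝟘)). apply addrN. Qed.
Lemma oppD (x y : A) : ⊖ (x ⊕ y) = ⊖ x ⊖ y.
Proof.
  apply (addIr (x ⊕ y)). rewrite addrN.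
  rewrite (addrC (⊖ x)), addrA, <- (addrA x y), addrN, addr0, addrN. reflexivity.
Qed.
Lemma subr0_eq (x y : A) : x ⊖ y = 𝟘 -> x = y.
Proof. intro H. rewrite <- (addrNK x y), H, add0r. reflexivity. Qed.
Lemma opp_eq (x y : A) : x ⊕ y = 𝟘 -> y = ⊖ x.
Proof. intro H. apply (addIr x). rewrite H, addrN. reflexivity. Qed.
Lemma sub_chain (a b c : A) : (a ⊖ b) ⊕ (b ⊖ c) = a ⊖ c.
Proof. rewrite <- addrA, (addrA (⊖ b)), addNr, add0r. reflexivity. Qed.
Lemma subKl (a b : A) : a ⊖ b ⊖ a = ⊖ b.
Proof. rewrite addrC, addrA, addNr, add0r. reflexivity. Qed.
Lemma subsubK (a b : A) : a ⊖ (a ⊖ b) = b.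
Proof. rewrite oppD, oppK, addrA, addrN, add0r. reflexivity. Qed.
Lemma sub0r (a : A) : a ⊖ 𝟘 = a.
Proof. rewrite opp0, addr0. reflexivity. Qed.
Lemma addrACA (a b c d : A) : (a ⊕ b) ⊕ (c ⊕ d) = (a ⊕ c) ⊕ (b ⊕ d).
Proof. rewrite <- !addrA. f_equal. rewrite !addrA. f_equal. apply addrC. Qed.

Lemma mul0r (x : A) : 𝟘 ⊗ x = 𝟘.
Proof. apply (addIr (𝟘 ⊗ x)). rewrite <- cmul_addl, !addr0. reflexivity. Qed.
Lemma mulr0 (x : A) : x ⊗ 𝟘 = 𝟘.
Proof. apply (addIr (x ⊗ 𝟘)). rewrite <- cmul_addr, !addr0. reflexivity. Qed.
Lemma mulNr (x y : A) : (⊖ x) ⊗ y = ⊖ (x ⊗ y).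
Proof. apply opp_eq. rewrite <- cmul_addl, addrN, mul0r. reflexivity. Qed.
Lemma mulrN (x y : A) : x ⊗ (⊖ y) = ⊖ (x ⊗ y).
Proof. apply opp_eq. rewrite <- cmul_addr, addrN, mulr0. reflexivity. Qed.
Lemma mulrA (x y z : A) : x ⊗ (y ⊗ z) = x ⊗ y ⊗ z. Proof. apply cmul_assoc. Qed.
Lemma mul1r (x : A) : 𝟙 ⊗ x = x. Proof. apply cmul_1l. Qed.
Lemma mulr1 (x : A) : x ⊗ 𝟙 = x. Proof. apply cmul_1r. Qed.
Lemma mulrDl (x y z : A) : (x ⊕ y) ⊗ z = x ⊗ z ⊕ y ⊗ z. Proof. apply cmul_addl. Qed.
Lemma mulrDr (x y z : A) : z ⊗ (x ⊕ y) = z ⊗ x ⊕ z ⊗ y. Proof. apply cmul_addr. Qed.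
Lemma mulrBl (x y z : A) : (x ⊖ y) ⊗ z = x ⊗ z ⊖ y ⊗ z.
Proof. rewrite mulrDl, mulNr. reflexivity. Qed.
Lemma mulrBr (x y z : A) : z ⊗ (x ⊖ y) = z ⊗ x ⊖ z ⊗ y.
Proof. rewrite mulrDr, mulrN. reflexivity. Qed.

Ltac ceqr := apply injective_projections; simpl; ring.

Lemma scal0 (x : A) : RtoC 0 ⊙ x = 𝟘.
Proof.
  apply (addIr (RtoC 0 ⊙ x)). rewrite <- cscal_addl, addr0.
  f_equal. ceqr.
Qed.
Lemma scalx0 (l : C) : l ⊙ 𝟘 = 𝟘.
Proof. apply (addIr (l ⊙ 𝟘)). rewrite <- cscal_addr, !addr0. reflexivity. Qed.
Lemma scalN (l : C) (x : A) : l ⊙ (⊖ x) = ⊖ (l ⊙ x).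
Proof. apply opp_eq. rewrite <- cscal_addr, addrN, scalx0. reflexivity. Qed.
Lemma scalNC (l : C) (x : A) : (- l)%C ⊙ x = ⊖ (l ⊙ x).
Proof.
  apply opp_eq. rewrite <- cscal_addl.
  replace (l + - l)%C with (RtoC 0) by ceqr. apply scal0.
Qed.
Lemma scalN1 (x : A) : RtoC (-1) ⊙ x = ⊖ x.
Proof.
  replace (RtoC (-1)) with (- RtoC 1)%C by ceqr. rewrite scalNC, cscal_1. reflexivity.
Qed.
Lemma scalDr (l : C) (x y : A) : l ⊙ (x ⊕ y) = l ⊙ x ⊕ l ⊙ y. Proof. apply cscal_addr. Qed.
Lemma scalDl (l m : C) (x : A) : (l + m)%C ⊙ x = l ⊙ x ⊕ m ⊙ x. Proof. apply cscal_addl. Qed.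
Lemma scalA (l m : C) (x : A) : (l * m)%C ⊙ x = l ⊙ (m ⊙ x). Proof. apply cscal_mul. Qed.
Lemma scal_mull (l : C) (x y : A) : (l ⊙ x) ⊗ y = l ⊙ (x ⊗ y).
Proof. symmetry; apply cscal_mull. Qed.
Lemma scal_mulr (l : C) (x y : A) : x ⊗ (l ⊙ y) = l ⊙ (x ⊗ y).
Proof. symmetry; apply cscal_mulr. Qed.

Lemma norm0 : nm 𝟘 = 0.
Proof. rewrite <- (scal0 𝟘), cnorm_scal, Cmod_0. ring. Qed.
Lemma normN (x : A) : nm (⊖ x) = nm x.
Proof. rewrite <- scalN1, cnorm_scal, Cmod_R, Rabs_left by lra. ring. Qed.
Lemma norm_ge0 (x : A) : 0 <= nm x.
Proof.
  pose proof (cnorm_triangle A x (⊖ x)) as H.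
  rewrite addrN, norm0, normN in H. lra.
Qed.
Lemma normD (x y : A) : nm (x ⊕ y) <= nm x + nm y. Proof. apply cnorm_triangle. Qed.
Lemma normM (x y : A) : nm (x ⊗ y) <= nm x * nm y. Proof. apply cnorm_submult. Qed.
Lemma normB_sym (x y : A) : nm (x ⊖ y) = nm (y ⊖ x).
Proof. rewrite <- normN, oppD, oppK, addrC. reflexivity. Qed.
Lemma norm_eq0 (x : A) : nm x = 0 -> x = 𝟘. Proof. apply cnorm_eq0. Qed.
Lemma normB_eq0 (x y : A) : nm (x ⊖ y) = 0 -> x = y.
Proof. intro H. apply subr0_eq, norm_eq0, H. Qed.
Lemma normB_tri (x y z : A) : nm (x ⊖ z) <= nm (x ⊖ y) + nm (y ⊖ z).
Proof. rewrite <- (sub_chain x y z). apply normD. Qed.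
Lemma normM3 (x y z : A) : nm (x ⊗ y ⊗ z) <= nm x * nm y * nm z.
Proof.
  eapply Rle_trans. apply normM. apply Rmult_le_compat_r. apply norm_ge0. apply normM.
Qed.
Lemma normscalR (r : R) (x : A) : nm (RtoC r ⊙ x) = Rabs r * nm x.
Proof. rewrite cnorm_scal, Cmod_R. reflexivity. Qed.

Lemma star0 : 𝟘⋆ = 𝟘.
Proof. apply (addIr (𝟘⋆)). rewrite <- cstar_add, !addr0. reflexivity. Qed.
Lemma starN (x : A) : (⊖ x)⋆ = ⊖ (x⋆).
Proof. apply opp_eq. rewrite <- cstar_add, addrN, star0. reflexivity. Qed.
Lemma star1 : 𝟙⋆ = 𝟙.
Proof.
  rewrite <- (mulr1 (𝟙⋆)).
  rewrite <- (cstar_invol A (𝟙⋆ ⊗ 𝟙)), cstar_mul, cstar_invol, mulr1, cstar_invol.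
  reflexivity.
Qed.
Lemma starD (x y : A) : (x ⊕ y)⋆ = x⋆ ⊕ y⋆. Proof. apply cstar_add. Qed.
Lemma starM (x y : A) : (x ⊗ y)⋆ = y⋆ ⊗ x⋆. Proof. apply cstar_mul. Qed.
Lemma starK (x : A) : x⋆⋆ = x. Proof. apply cstar_invol. Qed.
Lemma norm_star_le (x : A) : nm x <= nm (x⋆).
Proof.
  pose proof (cstar_identity A x) as H.
  pose proof (normM (x⋆) x) as H2.
  pose proof (norm_ge0 x). pose proof (norm_ge0 (x⋆)).
  destruct (Req_dec (nm x) 0) as [E|E]. lra.
  rewrite H in H2. nra.
Qed.
Lemma norm_star (x : A) : nm (x⋆) = nm x.
Proof.
  apply Rle_antisym. rewrite <- (starK x) at 2. apply norm_star_le. apply norm_star_le.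
Qed.
Lemma norm1_le : nm 𝟙 <= 1.
Proof.
  pose proof (cstar_identity A 𝟙) as H. rewrite star1, mul1r in H.
  pose proof (norm_ge0 𝟙). nra.
Qed.

Lemma pow_small (q : R) : 0 <= q < 1 ->
  forall eps, 0 < eps -> exists N, forall n, (N <= n)%nat -> q ^ n < eps.
Proof.
  intros Hq eps He. destruct (pow_lt_1_zero q) with (y := eps) as [N HN]; auto.
  rewrite Rabs_right; lra.
  exists N. intros n Hn. specialize (HN n Hn). rewrite Rabs_right in HN; auto.
  apply Rle_ge, pow_le; lra.
Qed.

Lemma prod4_le a b c d a' b' d' : 0 <= a <= a' -> 0 <= b <= b' -> 0 <= c -> 0 <= d <= d' ->
  a * b * c * d <= a' * b' * c * d'.
Proof.
  intros [Ha Ha'] [Hb Hb'] Hc [Hd Hd'].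
  apply Rmult_le_compat; auto.
  - apply Rmult_le_pos; [apply Rmult_le_pos|]; auto.
  - apply Rmult_le_compat_r; auto. apply Rmult_le_compat; auto.
Qed.

Definition cv (u : nat -> A) (l : A) : Prop :=
  forall eps, 0 < eps -> exists N, forall n, (N <= n)%nat -> nm (u n ⊖ l) < eps.

Lemma cv_uniq u l l' : cv u l -> cv u l' -> l = l'.
Proof.
  intros H1 H2. apply normB_eq0. apply Rle_antisym. 2: apply norm_ge0.
  apply le_epsilon. intros eps He.
  destruct (H1 (eps / 2)) as [N1 HN1]. lra. destruct (H2 (eps / 2)) as [N2 HN2]. lra.
  specialize (HN1 (N1 + N2)%nat ltac:(lia)). specialize (HN2 (N1 + N2)%nat ltac:(lia)).
  pose proof (normB_tri l (u (N1 + N2)%nat) l'). rewrite normB_sym in HN1. lra.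
Qed.

Lemma cv_shift u l : cv u l -> cv (fun n => u (S n)) l.
Proof. intros H eps He. destruct (H eps He) as [N HN]. exists N. intros n Hn. apply HN. lia. Qed.

Lemma cv_const x : cv (fun _ => x) x.
Proof. intros eps He. exists O. intros n _. rewrite addrN, norm0. lra. Qed.

Lemma cv_ext u v l : (forall n, u n = v n) -> cv u l -> cv v l.
Proof. intros E H eps He. destruct (H eps He) as [N HN]. exists N. intros n Hn. rewrite <- E. auto. Qed.

Lemma cv_sub u v l m : cv u l -> cv v m -> cv (fun n => u n ⊖ v n) (l ⊖ m).
Proof.
  intros H1 H2 eps He. destruct (H1 (eps / 2)) as [N1 HN1]. lra.
  destruct (H2 (eps / 2)) as [N2 HN2]. lra.
  exists (N1 + N2)%nat. intros n Hn.
  replace (u n ⊖ v n ⊖ (l ⊖ m)) with ((u n ⊖ l) ⊖ (v n ⊖ m))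
    by (rewrite !oppD, !oppK, addrACA; reflexivity).
  eapply Rle_lt_trans. apply normD. rewrite normN.
  specialize (HN1 n ltac:(lia)). specialize (HN2 n ltac:(lia)). lra.
Qed.

Lemma cv_geometric (v : nat -> A) l M q : 0 <= q < 1 ->
  (forall n, nm (v n ⊖ l) <= M * q ^ n) -> cv v l.
Proof.
  intros Hq H eps He.
  assert (HM : 0 <= M).
  { pose proof (H O) as H0. simpl in H0. pose proof (norm_ge0 (v O ⊖ l)). lra. }
  destruct (pow_small q Hq (eps / (M + 1))) as [N HN]. apply Rdiv_lt_0_compat; lra.
  exists N. intros n Hn. eapply Rle_lt_trans. apply H. specialize (HN n Hn).
  assert (M * q ^ n <= M * (eps / (M + 1))) by (apply Rmult_le_compat_l; lra).
  assert (M * (eps / (M + 1)) < eps).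
  { apply (Rmult_lt_reg_r (M + 1)). lra. unfold Rdiv. field_simplify; nra. }
  lra.
Qed.

Lemma cv_close u v l : cv u l -> cv (fun n => v n ⊖ u n) 𝟘 -> cv v l.
Proof.
  intros H1 H2 eps He. destruct (H1 (eps / 2)) as [N1 HN1]. lra.
  destruct (H2 (eps / 2)) as [N2 HN2]. lra.
  exists (N1 + N2)%nat. intros n Hn. pose proof (normB_tri (v n) (u n) l).
  specialize (HN1 n ltac:(lia)). specialize (HN2 n ltac:(lia)). rewrite sub0r in HN2. lra.
Qed.

Lemma cv_lipschitz (f : A -> A) K u l : 0 <= K ->
  (forall y z, nm (f y ⊖ f z) <= K * nm (y ⊖ z)) -> cv u l -> cv (fun n => f (u n)) (f l).
Proof.
  intros HK Hf H eps He. destruct (H (eps / (K + 1))) as [N HN]. apply Rdiv_lt_0_compat; lra.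
  exists N. intros n Hn. eapply Rle_lt_trans. apply Hf. specialize (HN n Hn).
  pose proof (norm_ge0 (u n ⊖ l)).
  assert (K * nm (u n ⊖ l) <= K * (eps / (K + 1))) by (apply Rmult_le_compat_l; lra).
  assert (K * (eps / (K + 1)) < eps).
  { apply (Rmult_lt_reg_r (K + 1)). lra. unfold Rdiv. field_simplify; nra. }
  lra.
Qed.

Lemma cv_mull c u l : cv u l -> cv (fun n => c ⊗ u n) (c ⊗ l).
Proof.
  apply (cv_lipschitz (fun y => c ⊗ y) (nm c)). apply norm_ge0.
  intros y z. rewrite <- mulrBr. apply normM.
Qed.

Lemma cv_mulr c u l : cv u l -> cv (fun n => u n ⊗ c) (l ⊗ c).
Proof.
  apply (cv_lipschitz (fun y => y ⊗ c) (nm c)). apply norm_ge0.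
  intros y z. rewrite <- mulrBl, Rmult_comm. apply normM.
Qed.

Lemma cv_mul u v l m B : cv u l -> cv v m -> (forall n, nm (u n) <= B) ->
  cv (fun n => u n ⊗ v n) (l ⊗ m).
Proof.
  intros H1 H2 HB eps He.
  assert (HB0 : 0 <= B) by (eapply Rle_trans; [apply norm_ge0 | apply (HB O)]).
  pose proof (norm_ge0 m).
  destruct (H1 (eps / (2 * (nm m + 1)))) as [N1 HN1]. apply Rdiv_lt_0_compat; lra.
  destruct (H2 (eps / (2 * (B + 1)))) as [N2 HN2]. apply Rdiv_lt_0_compat; lra.
  exists (N1 + N2)%nat. intros n Hn.
  rewrite <- (sub_chain _ (u n ⊗ m)), <- mulrBr, <- mulrBl.
  specialize (HN1 n ltac:(lia)). specialize (HN2 n ltac:(lia)).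
  eapply Rle_lt_trans. apply normD.
  pose proof (normM (u n) (v n ⊖ m)). pose proof (normM (u n ⊖ l) m).
  pose proof (HB n). pose proof (norm_ge0 (u n)). pose proof (norm_ge0 (v n ⊖ m)).
  pose proof (norm_ge0 (u n ⊖ l)).
  assert (nm (u n) * nm (v n ⊖ m) <= B * (eps / (2 * (B + 1)))) by (apply Rmult_le_compat; lra).
  assert (nm (u n ⊖ l) * nm m <= (eps / (2 * (nm m + 1))) * nm m) by (apply Rmult_le_compat; lra).
  assert (B * (eps / (2 * (B + 1))) < eps / 2).
  { apply (Rmult_lt_reg_r (2 * (B + 1))). lra. unfold Rdiv. field_simplify; nra. }
  assert ((eps / (2 * (nm m + 1))) * nm m < eps / 2).
  { apply (Rmult_lt_reg_r (2 * (nm m + 1))). lra. unfold Rdiv. field_simplify; nra. }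
  lra.
Qed.

Lemma cv_norm_le u l c : cv u l -> (forall n, nm (u n) <= c) -> nm l <= c.
Proof.
  intros H Hc. apply le_epsilon. intros eps He. destruct (H eps He) as [N HN].
  specialize (HN N (le_n N)). specialize (Hc N).
  pose proof (normB_tri l (u N) 𝟘) as Ht. rewrite !sub0r, normB_sym in Ht. lra.
Qed.

Lemma geometric_tail (u : nat -> A) M q : 0 <= M -> 0 <= q < 1 ->
  (forall n, nm (u (S n) ⊖ u n) <= M * q ^ n) ->
  forall n k, nm (u (n + k)%nat ⊖ u n) <= M * q ^ n / (1 - q).
Proof.
  intros HM Hq H n k.
  assert (Ht : nm (u (n + k)%nat ⊖ u n) <= M * q ^ n * (1 - q ^ k) / (1 - q)).
  { induction k as [|k IH].
    - rewrite Nat.add_0_r, addrN, norm0. simpl. right. field. lra.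
    - rewrite Nat.add_succ_r, <- (sub_chain _ (u (n + k)%nat)).
      eapply Rle_trans. apply normD. specialize (H (n + k)%nat). rewrite pow_add in H.
      simpl pow. apply (Rmult_le_reg_r (1 - q)). lra.
      unfold Rdiv in *. rewrite Rmult_assoc, Rinv_l, Rmult_1_r by lra.
      apply (Rmult_le_compat_r (1 - q)) in IH; [|lra].
      rewrite Rmult_assoc, Rinv_l, Rmult_1_r in IH by lra. nra. }
  eapply Rle_trans. exact Ht. unfold Rdiv. apply Rmult_le_compat_r.
  apply Rlt_le, Rinv_0_lt_compat; lra.
  pose proof (pow_le q k (proj1 Hq)). pose proof (pow_le q n (proj1 Hq)).
  assert (0 <= M * q ^ n) by (apply Rmult_le_pos; lra). nra.
Qed.

Lemma cauchy_geometric (u : nat -> A) M q : 0 <= M -> 0 <= q < 1 ->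
  (forall n, nm (u (S n) ⊖ u n) <= M * q ^ n) -> exists l, cv u l.
Proof.
  intros HM Hq H. pose proof (geometric_tail u M q HM Hq H) as Ht.
  apply (ccomplete A u). intros eps He.
  destruct (pow_small q Hq (eps * (1 - q) / (M + 1))) as [N HN].
  { apply Rdiv_lt_0_compat; [apply Rmult_lt_0_compat|]; lra. }
  assert (Hb : forall a b, (N <= a)%nat -> (a <= b)%nat -> nm (u b ⊖ u a) < eps).
  { intros a b Ha Hab. replace b with (a + (b - a))%nat by lia.
    eapply Rle_lt_trans. apply Ht. specialize (HN a Ha).
    apply (Rmult_lt_reg_r (1 - q)). lra.
    unfold Rdiv. rewrite Rmult_assoc, Rinv_l, Rmult_1_r by lra.
    pose proof (pow_le q a (proj1 Hq)).
    assert (M * q ^ a <= M * (eps * (1 - q) / (M + 1))) by (apply Rmult_le_compat_l; lra).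
    assert (M * (eps * (1 - q) / (M + 1)) < eps * (1 - q)).
    { apply (Rmult_lt_reg_r (M + 1)). lra. unfold Rdiv. field_simplify; nra. }
    lra. }
  exists N. intros m n Hm Hn. destruct (Nat.le_ge_cases m n) as [h|h].
  - rewrite normB_sym. apply Hb; auto.
  - apply Hb; auto.
Qed.

Fixpoint apow (x : A) (n : nat) : A :=
  match n with O => 𝟙 | S n => x ⊗ apow x n end.
Fixpoint geom_sum (x : A) (n : nat) : A :=
  match n with O => 𝟘 | S n => geom_sum x n ⊕ apow x n end.

Lemma apow_Sr (x : A) n : apow x (S n) = apow x n ⊗ x.
Proof.
  induction n as [|n IH]; simpl. rewrite mulr1, mul1r. reflexivity.
  simpl in IH. rewrite IH, mulrA, IH. reflexivity.
Qed.

Lemma apow_add (x : A) a b : apow x (a + b) = apow x a ⊗ apow x b.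
Proof.
  induction a as [|a IH]; simpl. rewrite mul1r; auto.
  rewrite IH, mulrA. reflexivity.
Qed.

Lemma apow_norm (x : A) n : nm (apow x n) <= nm x ^ n.
Proof.
  induction n as [|n IH]; simpl. apply norm1_le.
  eapply Rle_trans. apply normM. apply Rmult_le_compat_l. apply norm_ge0. auto.
Qed.

Lemma apow_scal (c : C) (z : A) j : apow (c ⊙ z) j = (c ^ j)%C ⊙ apow z j.
Proof.
  induction j as [|j IH]; simpl. symmetry; apply cscal_1.
  rewrite IH, scal_mull, scal_mulr, scalA. reflexivity.
Qed.

Lemma geom_sum_mul (x : A) n : (𝟙 ⊖ x) ⊗ geom_sum x n = 𝟙 ⊖ apow x n.
Proof.
  induction n as [|n IH]; simpl. rewrite mulr0, addrN. reflexivity.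
  rewrite mulrDr, IH, mulrBl, mul1r. apply sub_chain.
Qed.

Lemma geom_sum_mulr (x : A) n : geom_sum x n ⊗ (𝟙 ⊖ x) = 𝟙 ⊖ apow x n.
Proof.
  induction n as [|n IH]; simpl. rewrite mul0r, addrN. reflexivity.
  rewrite mulrDl, IH, mulrBr, mulr1, <- apow_Sr. apply sub_chain.
Qed.

Lemma neumann_series (x : A) : nm x < 1 -> exists y,
  (𝟙 ⊖ x) ⊗ y = 𝟙 /\ y ⊗ (𝟙 ⊖ x) = 𝟙 /\
  nm y <= 1 / (1 - nm x) /\ nm (y ⊖ 𝟙) <= nm x / (1 - nm x).
Proof.
  intro Hx. set (q := nm x). assert (Hq : 0 <= q < 1) by (split; [apply norm_ge0 | exact Hx]).
  assert (Hinc : forall n, nm (geom_sum x (S n) ⊖ geom_sum x n) <= 1 * q ^ n).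
  { intro n. simpl. rewrite addrC, addKr, Rmult_1_l. apply apow_norm. }
  pose proof (geometric_tail _ _ _ Rle_0_1 Hq Hinc) as Htail.
  destruct (cauchy_geometric _ _ _ Rle_0_1 Hq Hinc) as [y Hy].
  assert (Hpow : cv (fun n => 𝟙 ⊖ apow x n) 𝟙).
  { apply (cv_geometric _ _ 1 q Hq). intro n.
    rewrite addrC, addKr, normN, Rmult_1_l. apply apow_norm. }
  exists y. split; [|split; [|split]].
  - apply (cv_uniq (fun n => (𝟙 ⊖ x) ⊗ geom_sum x n)). apply cv_mull, Hy.
    apply (cv_ext _ _ _ (fun n => eq_sym (geom_sum_mul x n)) Hpow).
  - apply (cv_uniq (fun n => geom_sum x n ⊗ (𝟙 ⊖ x))). apply cv_mulr, Hy.
    apply (cv_ext _ _ _ (fun n => eq_sym (geom_sum_mulr x n)) Hpow).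
  - apply (cv_norm_le _ _ _ Hy). intro n.
    pose proof (Htail O n) as H. simpl in H. rewrite sub0r, Rmult_1_r in H. exact H.
  - apply (cv_norm_le (fun n => geom_sum x (S n) ⊖ 𝟙)).
    { apply cv_sub. apply cv_shift, Hy. apply cv_const. }
    intro n. pose proof (Htail 1%nat n) as H.
    simpl in H. rewrite add0r, Rmult_1_r, Rmult_1_l in H. exact H.
Qed.

(** A chosen two-sided inverse; meaningful for invertible elements. *)
Definition cinv (x : A) : A :=
  epsilon (inhabits 𝟘) (fun y => x ⊗ y = 𝟙 /\ y ⊗ x = 𝟙).

Lemma cinv_spec (x : A) : cinvertible x -> x ⊗ cinv x = 𝟙 /\ cinv x ⊗ x = 𝟙.
Proof.
  intros [y Hy]. unfold cinv.
  apply (epsilon_spec (inhabits 𝟘) (fun y => x ⊗ y = 𝟙 /\ y ⊗ x = 𝟙)). exists y; auto.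
Qed.

Lemma inv_uniq (x y z : A) : x ⊗ y = 𝟙 -> z ⊗ x = 𝟙 -> y = z.
Proof. intros H1 H2. rewrite <- (mul1r y), <- H2, <- mulrA, H1, mulr1. reflexivity. Qed.

Lemma cinv_eq (x y : A) : x ⊗ y = 𝟙 -> y ⊗ x = 𝟙 -> cinv x = y.
Proof.
  intros H1 H2. assert (Hi : cinvertible x) by (exists y; auto).
  destruct (cinv_spec x Hi) as [H3 H4]. symmetry. apply (inv_uniq x y (cinv x)); auto.
Qed.

Lemma invertible_mk (x y : A) : x ⊗ y = 𝟙 -> y ⊗ x = 𝟙 -> cinvertible x.
Proof. intros; exists y; auto. Qed.

Lemma invertible_1 : cinvertible 𝟙.
Proof. apply (invertible_mk _ 𝟙); apply mul1r. Qed.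

Lemma cinv1 : cinv 𝟙 = 𝟙.
Proof. apply cinv_eq; apply mul1r. Qed.

Lemma perturb_inverse (y z : A) : cinvertible y -> nm z * nm (cinv y) <= 1 / 2 ->
  cinvertible (y ⊖ z) /\ nm (cinv (y ⊖ z)) <= 2 * nm (cinv y) /\
  nm (cinv (y ⊖ z) ⊖ cinv y) <= 2 * nm (cinv y) ^ 2 * nm z.
Proof.
  intros Hy Hs. destruct (cinv_spec y Hy) as [Y1 Y2]. set (yi := cinv y) in *.
  set (w := yi ⊗ z).
  assert (Hw : nm w <= 1 / 2).
  { unfold w. eapply Rle_trans. apply normM. rewrite Rmult_comm. auto. }
  destruct (neumann_series w ltac:(lra)) as [v [V1 [V2 [V3 V4]]]].
  assert (E : y ⊖ z = y ⊗ (𝟙 ⊖ w)).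
  { unfold w. rewrite mulrBr, mulr1, mulrA, Y1, mul1r. reflexivity. }
  assert (I1 : (y ⊖ z) ⊗ (v ⊗ yi) = 𝟙).
  { rewrite E, <- mulrA, (mulrA (𝟙 ⊖ w)), V1, mul1r. exact Y1. }
  assert (I2 : (v ⊗ yi) ⊗ (y ⊖ z) = 𝟙).
  { rewrite E, <- mulrA, (mulrA yi), Y2, mul1r. exact V2. }
  rewrite (cinv_eq _ _ I1 I2).
  pose proof (norm_ge0 w). pose proof (norm_ge0 yi). pose proof (norm_ge0 z).
  split; [exists (v ⊗ yi); auto | split].
  - eapply Rle_trans. apply normM.
    assert (nm v <= 2).
    { eapply Rle_trans. exact V3. apply (Rmult_le_reg_r (1 - nm w)). lra.
      unfold Rdiv. rewrite Rmult_assoc, Rinv_l by lra. lra. }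
    pose proof (norm_ge0 v). nra.
  - replace (v ⊗ yi ⊖ yi) with ((v ⊖ 𝟙) ⊗ yi) by (rewrite mulrBl, mul1r; reflexivity).
    eapply Rle_trans. apply normM.
    assert (nm (v ⊖ 𝟙) <= 2 * nm w).
    { eapply Rle_trans. exact V4. apply (Rmult_le_reg_r (1 - nm w)). lra.
      unfold Rdiv. rewrite Rmult_assoc, Rinv_l by lra. nra. }
    assert (nm w <= nm yi * nm z) by (unfold w; apply normM).
    pose proof (norm_ge0 (v ⊖ 𝟙)). simpl. nra.
Qed.

Definition sc (l : C) : A := l ⊙ 𝟙.

Definition spectrum (x : A) (l : C) : Prop := ~ cinvertible (x ⊖ sc l).

Lemma sc_mull (l : C) (x : A) : sc l ⊗ x = l ⊙ x.
Proof. unfold sc. rewrite scal_mull, mul1r. reflexivity. Qed.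
Lemma sc_mulr (l : C) (x : A) : x ⊗ sc l = l ⊙ x.
Proof. unfold sc. rewrite scal_mulr, mulr1. reflexivity. Qed.
Lemma scD (l m : C) : sc (l + m) = sc l ⊕ sc m.
Proof. unfold sc. apply scalDl. Qed.
Lemma scM (l m : C) : sc (l * m) = sc l ⊗ sc m.
Proof. unfold sc. rewrite scal_mull, mul1r, scalA. reflexivity. Qed.
Lemma scN (l : C) : sc (- l) = ⊖ sc l.
Proof. unfold sc. apply scalNC. Qed.
Lemma scB (l m : C) : sc l ⊖ sc m = sc (l - m).
Proof. unfold Cminus. rewrite scD, scN. reflexivity. Qed.
Lemma norm_sc (l : C) : nm (sc l) <= Cmod l.
Proof.
  unfold sc. rewrite cnorm_scal. pose proof norm1_le. pose proof (Cmod_ge_0 l). nra.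
Qed.
Lemma star_sc (l : C) : (sc l)⋆ = sc (Cconj l).
Proof. unfold sc. rewrite cstar_scal, star1. reflexivity. Qed.
Lemma selfadj_sc (c : R) : (sc (RtoC c))⋆ = sc (RtoC c).
Proof. rewrite star_sc. f_equal. ceqr. Qed.
Lemma selfadj_add (x y : A) : x⋆ = x -> y⋆ = y -> (x ⊕ y)⋆ = x ⊕ y.
Proof. intros H1 H2. rewrite starD, H1, H2. reflexivity. Qed.
Lemma selfadj_sub (x y : A) : x⋆ = x -> y⋆ = y -> (x ⊖ y)⋆ = x ⊖ y.
Proof. intros H1 H2. rewrite starD, starN, H1, H2. reflexivity. Qed.

Lemma Cmod_sqr (z : C) : Cmod z * Cmod z = fst z ^ 2 + snd z ^ 2.
Proof.
  unfold Cmod. rewrite sqrt_sqrt. reflexivity.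
  pose proof (pow2_ge_0 (fst z)). pose proof (pow2_ge_0 (snd z)). lra.
Qed.

Lemma Cmod_real (l : C) : snd l = 0 -> Cmod l = Rabs (fst l).
Proof. intro H. destruct l as [a b]. simpl in *. subst. apply Cmod_R. Qed.

Lemma scal_invertible (l : C) (x : A) : l <> RtoC 0 -> cinvertible x -> cinvertible (l ⊙ x).
Proof.
  intros Hl Hx. destruct (cinv_spec _ Hx) as [I1 I2].
  apply (invertible_mk _ ((/ l)%C ⊙ cinv x)).
  - rewrite scal_mull, scal_mulr, <- scalA, I1.
    replace (l * / l)%C with (RtoC 1) by (field; auto). apply cscal_1.
  - rewrite scal_mull, scal_mulr, <- scalA, I2.
    replace (/ l * l)%C with (RtoC 1) by (field; auto). apply cscal_1.
Qed.

Lemma invertible_opp (x : A) : cinvertible (⊖ x) -> cinvertible x.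
Proof.
  intro H. destruct (cinv_spec _ H) as [I1 I2].
  apply (invertible_mk _ (⊖ cinv (⊖ x))).
  - rewrite mulrN, <- mulNr. exact I1.
  - rewrite mulNr, <- mulrN. exact I2.
Qed.

(** The spectrum lies in the disc of radius ||x|| (Neumann series). *)
Lemma spectrum_norm (x : A) (l : C) : spectrum x l -> Cmod l <= nm x.
Proof.
  intro Hsp. destruct (Rle_dec (Cmod l) (nm x)) as [H|H]; auto. exfalso. apply Hsp.
  apply Rnot_le_lt in H. pose proof (norm_ge0 x).
  assert (Hl : l <> 0%C). { intro E. rewrite E, Cmod_0 in H. lra. }
  set (w := (/ l)%C ⊙ x).
  assert (Hw : nm w < 1).
  { unfold w. rewrite cnorm_scal, Cmod_inv by auto.
    pose proof (Cmod_ge_0 l). apply (Rmult_lt_reg_l (Cmod l)). lra.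
    rewrite <- Rmult_assoc, Rinv_r, Rmult_1_l, Rmult_1_r by lra. lra. }
  destruct (neumann_series w Hw) as [v [V1 [V2 _]]].
  replace (x ⊖ sc l) with ((- l)%C ⊙ (𝟙 ⊖ w)).
  - apply scal_invertible. intro E. apply Hl. replace l with (- - l)%C by ring.
    rewrite E. ceqr.
    apply (invertible_mk _ v V1 V2).
  - rewrite scalDr, scalN. unfold w. rewrite <- scalA.
    replace (- l * / l)%C with (- (1))%C by (field; auto).
    rewrite (scalNC 1%C x), cscal_1, oppK, (scalNC l), addrC. reflexivity.
Qed.

Lemma spectrum_reflect (x : A) (c l : C) : spectrum x l -> spectrum (sc c ⊖ x) (c - l).
Proof.
  unfold spectrum. intros H1 H2. apply H1. apply invertible_opp.
  replace (⊖ (x ⊖ sc l)) with (sc c ⊖ x ⊖ sc (c - l)); auto.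
  rewrite <- scB, !oppD, !oppK. rewrite <- !addrA.
  rewrite (addrA (⊖ x) (⊖ sc c)), (addrC (⊖ x) (⊖ sc c)), <- addrA, addrA, addrN, add0r.
  reflexivity.
Qed.

Lemma spectrum_reflect' (p : A) (c l : C) : spectrum (sc c ⊖ p) l -> spectrum p (c - l).
Proof.
  intro H. pose proof (spectrum_reflect _ c l H) as H'. rewrite subsubK in H'. exact H'.
Qed.

Lemma spectrum_shift (x : A) (c l : C) : spectrum (x ⊖ sc c) l -> spectrum x (l + c).
Proof.
  unfold spectrum. intros H1 H2. apply H1. replace (l + c)%C with (c + l)%C in H2 by ring.
  rewrite scD, oppD, addrA in H2. exact H2.
Qed.

(** Self-adjoint elements have real spectrum: if h - (a + ib) were singular
    with b <> 0, then so would be k - (a + i(b + s)) for k = h + is, and for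
    large s this contradicts ||k||^2 = ||k* k|| <= ||h||^2 + s^2. *)
Lemma selfadj_spectrum_real (h : A) (l : C) : h⋆ = h -> spectrum h l -> snd l = 0.
Proof.
  intros Hs Hn. destruct l as [al be]. simpl.
  destruct (Req_dec be 0) as [E|E]; auto. exfalso.
  set (N := nm h). pose proof (norm_ge0 h) as HN. fold N in HN.
  set (s := (N * N + 1) / (2 * be)).
  set (k := h ⊕ sc (0, s)).
  assert (Hk : spectrum k ((al, be) + (0, s))%C).
  { unfold spectrum, k. replace (h ⊕ sc (0, s) ⊖ sc ((al, be) + (0, s))%C) with (h ⊖ sc (al, be)).
    exact Hn. rewrite scD, oppD, <- addrA. f_equal.
    rewrite addrC, <- addrA, addNr, addr0. reflexivity. }
  apply spectrum_norm in Hk.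
  assert (Hkk : nm k * nm k <= N * N + s * s).
  { rewrite <- (cstar_identity A k). unfold k.
    rewrite starD, Hs, star_sc.
    rewrite mulrDl, !mulrDr, <- scM, sc_mulr, sc_mull, !addrA.
    rewrite <- (addrA (h ⊗ h)), <- scalDl.
    replace ((0, s) + Cconj (0, s))%C with (RtoC 0) by ceqr.
    rewrite scal0, addr0.
    eapply Rle_trans. apply normD. fold N.
    apply Rplus_le_compat.
    - pose proof (cstar_identity A h) as Hh. rewrite Hs in Hh. fold N in Hh. lra.
    - eapply Rle_trans. apply norm_sc.
      replace (Cconj (0, s) * (0, s))%C with (RtoC (s * s)) by ceqr.
      rewrite Cmod_R, Rabs_right. lra. apply Rle_ge, Rle_0_sqr. }
  pose proof (Cmod_ge_0 ((al, be) + (0, s))%C).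
  assert (Cmod ((al, be) + (0, s))%C * Cmod ((al, be) + (0, s))%C <= nm k * nm k)
    by (apply Rmult_le_compat; auto).
  rewrite Cmod_sqr in H0. simpl in H0.
  assert (2 * be * s = N * N + 1) by (unfold s; field; auto).
  nra.
Qed.

Fixpoint asum (f : nat -> A) (n : nat) : A :=
  match n with O => 𝟘 | S n => asum f n ⊕ f n end.
Fixpoint rsum (f : nat -> R) (n : nat) : R :=
  match n with O => 0 | S n => rsum f n + f n end.
Fixpoint csum (f : nat -> C) (n : nat) : C :=
  match n with O => RtoC 0 | S n => (csum f n + f n)%C end.

Lemma asum_ext (f g : nat -> A) n :
  (forall k, (k < n)%nat -> f k = g k) -> asum f n = asum g n.
Proof.
  induction n as [|n IH]; intro H; simpl; auto.
  rewrite IH, H; auto; intros k Hk; apply H; lia.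
Qed.
Lemma rsum_le (f g : nat -> R) n :
  (forall k, (k < n)%nat -> f k <= g k) -> rsum f n <= rsum g n.
Proof.
  induction n as [|n IH]; intro H; simpl. lra.
  apply Rplus_le_compat. apply IH; intros; apply H; lia. apply H; lia.
Qed.
Lemma rsum_const (c : R) n : rsum (fun _ => c) n = INR n * c.
Proof. induction n as [|n IH]. simpl; ring. simpl rsum. rewrite IH, S_INR. ring. Qed.

Lemma asum_add (f g : nat -> A) n : asum (fun k => f k ⊕ g k) n = asum f n ⊕ asum g n.
Proof.
  induction n as [|n IH]; simpl. rewrite addr0; auto.
  rewrite IH. apply addrACA.
Qed.
Lemma asum_sub (f g : nat -> A) n : asum (fun k => f k ⊖ g k) n = asum f n ⊖ asum g n.
Proof.
  induction n as [|n IH]; simpl. rewrite sub0r; auto.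
  rewrite IH, oppD. apply addrACA.
Qed.
Lemma asum_scalC (c : nat -> C) (x : A) n : asum (fun k => c k ⊙ x) n = csum c n ⊙ x.
Proof.
  induction n as [|n IH]; simpl. rewrite scal0; auto.
  rewrite IH, scalDl. reflexivity.
Qed.
Lemma asum_mull (x : A) (f : nat -> A) n : x ⊗ asum f n = asum (fun k => x ⊗ f k) n.
Proof.
  induction n as [|n IH]; simpl. apply mulr0.
  rewrite mulrDr, IH. reflexivity.
Qed.
Lemma asum_mulr (x : A) (f : nat -> A) n : asum f n ⊗ x = asum (fun k => f k ⊗ x) n.
Proof.
  induction n as [|n IH]; simpl. apply mul0r.
  rewrite mulrDl, IH. reflexivity.
Qed.
Lemma asum_swap (f : nat -> nat -> A) n m :
  asum (fun k => asum (fun j => f k j) m) n = asum (fun j => asum (fun k => f k j) n) m.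
Proof.
  induction n as [|n IH]; simpl.
  - induction m as [|m IHm]; simpl; auto. rewrite <- IHm, addr0. reflexivity.
  - rewrite IH, <- asum_add. reflexivity.
Qed.
Lemma asum_norm (f : nat -> A) n : nm (asum f n) <= rsum (fun k => nm (f k)) n.
Proof.
  induction n as [|n IH]; simpl. rewrite norm0; lra.
  eapply Rle_trans. apply normD. lra.
Qed.
Lemma asum_split (f : nat -> A) n :
  asum f (2 * n) = asum (fun k => f (2 * k)%nat) n ⊕ asum (fun k => f (2 * k + 1)%nat) n.
Proof.
  induction n as [|n IH]; simpl. rewrite addr0; auto.
  replace (n + S (n + 0))%nat with (S (2 * n)) by lia. simpl.
  replace (n + (n + 0))%nat with (2 * n)%nat by lia. rewrite IH.
  replace (2 * n + 1)%nat with (S (2 * n)) by lia.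
  rewrite <- !addrA. f_equal. rewrite !addrA. f_equal. apply addrC.
Qed.
Lemma asum_first (f : nat -> A) n : (1 <= n)%nat ->
  (forall k, (1 <= k < n)%nat -> f k = 𝟘) -> asum f n = f O.
Proof.
  induction n as [|n IH]; intros H1 H2. lia.
  destruct n as [|n]. simpl. apply add0r.
  simpl asum. rewrite (H2 (S n)) by lia. rewrite addr0. apply IH. lia.
  intros; apply H2; lia.
Qed.
Lemma geom_sum_asum (x : A) n : geom_sum x n = asum (apow x) n.
Proof. induction n as [|n IH]; simpl; auto. rewrite IH; auto. Qed.

Definition average (N : nat) (f : nat -> A) : A := RtoC (/ INR N) ⊙ asum f N.

Lemma average_sub (f g : nat -> A) N :
  average N f ⊖ average N g = average N (fun k => f k ⊖ g k).
Proof. unfold average. rewrite asum_sub, <- scalN, scalDr. reflexivity. Qed.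

Lemma average_norm (f : nat -> A) N M : (1 <= N)%nat ->
  (forall k, (k < N)%nat -> nm (f k) <= M) -> nm (average N f) <= M.
Proof.
  intros HN H. assert (HN0 : 0 < INR N) by (apply lt_0_INR; lia).
  unfold average. rewrite normscalR.
  eapply Rle_trans. apply Rmult_le_compat_l. apply Rabs_pos. apply asum_norm.
  eapply Rle_trans. apply Rmult_le_compat_l. apply Rabs_pos. apply rsum_le. exact H.
  rewrite rsum_const, Rabs_right. right. field. lra.
  apply Rle_ge, Rlt_le, Rinv_0_lt_compat; lra.
Qed.

Definition cis (t : R) : C := (cos t, sin t).
Definition polar (r t : R) : C := (RtoC r * cis t)%C.

Lemma cis_add a b : cis (a + b) = (cis a * cis b)%C.
Proof.
  unfold cis. apply injective_projections; simpl; [rewrite cos_plus|rewrite sin_plus]; ring.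
Qed.
Lemma cis_0 : cis 0 = RtoC 1.
Proof. unfold cis. rewrite cos_0, sin_0. reflexivity. Qed.
Lemma cis_PI : cis PI = RtoC (-1).
Proof. unfold cis. rewrite cos_PI, sin_PI. reflexivity. Qed.
Lemma cis_int m : cis (2 * PI * INR m) = RtoC 1.
Proof.
  unfold cis. pose proof (cos_period 0 m). pose proof (sin_period 0 m).
  rewrite Rplus_0_l, cos_0 in H. rewrite Rplus_0_l, sin_0 in H0.
  replace (2 * PI * INR m) with (2 * INR m * PI) by ring. rewrite H, H0. reflexivity.
Qed.
Lemma cis_ne1 t : 0 < t < 2 * PI -> cis t <> RtoC 1.
Proof.
  intros Ht E. unfold cis in E. injection E as E1 E2.
  destruct (sin_eq_O_2PI_0 t) as [h|[h|h]]; try lra.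
  subst t. rewrite cos_PI in E1. lra.
Qed.
Lemma Cmod_cis t : Cmod (cis t) = 1.
Proof.
  unfold Cmod, cis. rewrite <- sqrt_1. f_equal. simpl.
  pose proof (sin2_cos2 t). unfold Rsqr in *. nra.
Qed.
Lemma cis_pow t j : (cis t ^ j)%C = cis (INR j * t).
Proof.
  induction j as [|j IH]; simpl Cpow. rewrite Rmult_0_l, cis_0. reflexivity.
  rewrite IH, <- cis_add, S_INR. f_equal. ring.
Qed.

Lemma sin_abs_le y : Rabs (sin y) <= Rabs y.
Proof.
  assert (Hpos : forall y, 0 <= y -> Rabs (sin y) <= Rabs y).
  { intros z Hz. pose proof PI2_1. pose proof (SIN_bound z).
    destruct (Rle_dec z PI) as [Hp|Hp].
    - destruct (Req_dec z 0) as [E|E]. subst; rewrite sin_0, Rabs_R0; lra.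
      rewrite !Rabs_right. apply Rlt_le, sin_lt_x. lra. lra. apply Rle_ge, sin_ge_0; lra.
    - rewrite (Rabs_right z) by lra. apply Rabs_le. lra. }
  destruct (Rle_dec 0 y) as [Hy|Hy]. apply Hpos; auto.
  pose proof (Hpos (- y)) as H. rewrite sin_neg, !Rabs_Ropp in H. apply H. lra.
Qed.

(** The map t |-> cis t is 1-Lipschitz: |e^(ia) - e^(ib)| = 2|sin((a-b)/2)|. *)
Lemma cis_dist a b : Cmod (cis a - cis b) <= Rabs (a - b).
Proof.
  apply Rsqr_incr_0_var. 2: apply Rabs_pos.
  assert (H : fst (cis a - cis b)%C ^ 2 + snd (cis a - cis b)%C ^ 2 = 2 - 2 * cos (a - b)).
  { unfold cis; simpl. rewrite cos_minus. pose proof (sin2_cos2 a). pose proof (sin2_cos2 b).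
    unfold Rsqr in *. nra. }
  unfold Rsqr. rewrite Cmod_sqr, H.
  replace (a - b) with (2 * ((a - b) / 2)) at 1 by field. rewrite cos_2a_sin.
  pose proof (sin_abs_le ((a - b) / 2)) as Hs.
  assert (Rabs (sin ((a - b) / 2)) * Rabs (sin ((a - b) / 2))
          <= Rabs ((a - b) / 2) * Rabs ((a - b) / 2))
    by (apply Rmult_le_compat; auto; apply Rabs_pos).
  rewrite <- !Rabs_mult in H0. rewrite !Rabs_right in H0 by (apply Rle_ge, Rle_0_sqr).
  rewrite <- Rabs_mult, Rabs_right by (apply Rle_ge, Rle_0_sqr). nra.
Qed.

Lemma Cmod_polar r t : 0 <= r -> Cmod (polar r t) = r.
Proof. intro H. unfold polar. rewrite Cmod_mult, Cmod_cis, Cmod_R, Rabs_right; lra. Qed.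
Lemma polar_dist_angle r a b : 0 <= r -> Cmod (polar r a - polar r b) <= r * Rabs (a - b).
Proof.
  intro H. unfold polar.
  replace (RtoC r * cis a - RtoC r * cis b)%C with (RtoC r * (cis a - cis b))%C by ring.
  rewrite Cmod_mult, Cmod_R, Rabs_right by lra. apply Rmult_le_compat_l; auto. apply cis_dist.
Qed.
Lemma polar_dist_radius r s t : Cmod (polar r t - polar s t) = Rabs (r - s).
Proof.
  unfold polar. replace (RtoC r * cis t - RtoC s * cis t)%C with (RtoC (r - s) * cis t)%C.
  rewrite Cmod_mult, Cmod_cis, Cmod_R. ring.
  rewrite RtoC_minus. ring.
Qed.

Lemma csum_cis (t : R) N :
  ((RtoC 1 - cis t) * csum (fun k => cis (INR k * t)) N = RtoC 1 - cis (INR N * t))%C.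
Proof.
  induction N as [|N IH].
  - simpl csum. rewrite Rmult_0_l, cis_0. ring.
  - simpl csum. rewrite Cmult_plus_distr_l, IH, S_INR.
    replace ((INR N + 1) * t) with (t + INR N * t) by ring. rewrite cis_add. ring.
Qed.

Lemma csum_roots N j : (0 < j < N)%nat ->
  csum (fun k => cis (INR k * (INR j * (2 * PI / INR N)))) N = RtoC 0.
Proof.
  intros Hj. pose proof PI_RGT_0 as Hpi.
  assert (HN : 0 < INR N) by (apply lt_0_INR; lia).
  assert (Hjn : INR j < INR N) by (apply lt_INR; lia).
  assert (Hj0 : 0 < INR j) by (apply lt_0_INR; lia).
  set (t := INR j * (2 * PI / INR N)).
  pose proof (csum_cis t N) as H.
  replace (INR N * t) with (2 * PI * INR j) in H by (unfold t; field; lra).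
  rewrite cis_int in H. replace (RtoC 1 - RtoC 1)%C with (RtoC 0) in H by ring.
  assert (Hne : (RtoC 1 - cis t)%C <> RtoC 0).
  { intro E. apply (cis_ne1 t). unfold t. split.
    apply Rmult_lt_0_compat; auto. apply Rdiv_lt_0_compat; lra.
    apply (Rmult_lt_reg_r (INR N)); auto. unfold Rdiv. rewrite !Rmult_assoc, Rinv_l by lra. nra.
    replace (cis t) with (RtoC 1 - (RtoC 1 - cis t))%C by ring. rewrite E. ring. }
  match goal with |- ?S = _ =>
    replace S with (/ (RtoC 1 - cis t) * ((RtoC 1 - cis t) * S))%C by (field; auto) end.
  rewrite H. ring.
Qed.

Lemma csum_trivial_root N t : csum (fun k => cis (INR k * (0 * t))) N = RtoC (INR N).
Proof.
  induction N as [|N IH]; simpl csum. reflexivity.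
  rewrite IH, Rmult_0_l, Rmult_0_r, cis_0, S_INR, RtoC_plus. reflexivity.
Qed.

(** Summing the geometric sums of w^k z over the N-th roots of unity w^k kills
    every power z^j with 0 < j < N. *)
Lemma sum_rotated_geom_sums (z : A) N : (1 <= N)%nat ->
  asum (fun k => geom_sum (cis (INR k * (2 * PI / INR N)) ⊙ z) N) N = RtoC (INR N) ⊙ 𝟙.
Proof.
  intro HN. set (th := 2 * PI / INR N).
  rewrite (asum_ext _ (fun k => asum (fun j => cis (INR k * (INR j * th)) ⊙ apow z j) N)).
  2:{ intros k Hk. rewrite geom_sum_asum. apply asum_ext. intros j Hj.
      rewrite apow_scal, cis_pow. f_equal. f_equal. ring. }
  rewrite asum_swap.
  rewrite (asum_ext _ (fun j => csum (fun k => cis (INR k * (INR j * th))) N ⊙ apow z j)).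
  2:{ intros j Hj. apply asum_scalC. }
  rewrite asum_first; auto.
  - change (INR 0) with 0. rewrite csum_trivial_root. reflexivity.
  - intros j Hj. unfold th. rewrite csum_roots by lia. apply scal0.
Qed.

Lemma average_identity (z : A) (N : nat) : (1 <= N)%nat ->
  (forall k, (k < N)%nat -> cinvertible (𝟙 ⊖ cis (INR k * (2 * PI / INR N)) ⊙ z)) ->
  cinvertible (𝟙 ⊖ apow z N) /\
  cinv (𝟙 ⊖ apow z N) = average N (fun k => cinv (𝟙 ⊖ cis (INR k * (2 * PI / INR N)) ⊙ z)).
Proof.
  intros HN Hinv. assert (HN0 : 0 < INR N) by (apply lt_0_INR; lia).
  set (w := fun k => cis (INR k * (2 * PI / INR N)) ⊙ z).
  assert (Hpw : forall k, apow (w k) N = apow z N).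
  { intro k. unfold w. rewrite apow_scal, cis_pow.
    replace (INR N * (INR k * (2 * PI / INR N))) with (2 * PI * INR k) by (field; lra).
    rewrite cis_int. apply cscal_1. }
  assert (Hsum : asum (fun k => geom_sum (w k) N) N = RtoC (INR N) ⊙ 𝟙)
    by (apply sum_rotated_geom_sums; auto).
  assert (I1 : (𝟙 ⊖ apow z N) ⊗ average N (fun k => cinv (𝟙 ⊖ w k)) = 𝟙).
  { unfold average. rewrite scal_mulr, asum_mull.
    rewrite (asum_ext _ (fun k => geom_sum (w k) N)).
    - rewrite Hsum, <- scalA, <- RtoC_mult, Rinv_l by lra. apply cscal_1.
    - intros k Hk. destruct (cinv_spec _ (Hinv k Hk)) as [H1 _]. fold (w k) in H1.
      rewrite <- (Hpw k), <- geom_sum_mulr, <- mulrA, H1, mulr1. reflexivity. }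
  assert (I2 : average N (fun k => cinv (𝟙 ⊖ w k)) ⊗ (𝟙 ⊖ apow z N) = 𝟙).
  { unfold average. rewrite scal_mull, asum_mulr.
    rewrite (asum_ext _ (fun k => geom_sum (w k) N)).
    - rewrite Hsum, <- scalA, <- RtoC_mult, Rinv_l by lra. apply cscal_1.
    - intros k Hk. destruct (cinv_spec _ (Hinv k Hk)) as [_ H2]. fold (w k) in H2.
      rewrite <- (Hpw k), <- geom_sum_mul, mulrA, H2, mul1r. reflexivity. }
  split. exact (invertible_mk _ _ I1 I2). apply cinv_eq; auto.
Qed.

(** Compactness of [a, b] in the form needed for uniform bounds: a property
    P x K, monotone in the bound K, that holds with some bound on a
    neighbourhood of every point holds with one bound on all of [a, b]. *)
Lemma interval_uniform_bound (P : R -> R -> Prop) (a b : R) : a <= b ->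
  (forall x K K', P x K -> K <= K' -> P x K') ->
  (forall x, a <= x <= b -> exists d, 0 < d /\
     exists K, forall y, a <= y <= b -> Rabs (y - x) < d -> P y K) ->
  exists K, forall x, a <= x <= b -> P x K.
Proof.
  intros Hab Hmon Hloc.
  set (E := fun x => a <= x <= b /\ exists K, forall y, a <= y <= x -> P y K).
  assert (Ea : E a).
  { split. lra. destruct (Hloc a) as [d [Hd [K HK]]]. lra.
    exists K. intros y Hy. apply HK. lra. replace (y - a) with 0 by lra. rewrite Rabs_R0; lra. }
  assert (Hb : bound E). { exists b. intros x Hx. apply Hx. }
  destruct (completeness E Hb (ex_intro _ a Ea)) as [c [Hc1 Hc2]].
  assert (Hac : a <= c) by (apply Hc1; auto).
  assert (Hcb : c <= b). { apply Hc2. intros x Hx. apply Hx. }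
  destruct (Hloc c) as [d [Hd [K0 HK0]]]. lra.
  assert (Hx : exists x, E x /\ c - d / 2 < x).
  { apply NNPP. intro Hn. assert (c <= c - d / 2). apply Hc2. intros x Hx.
    destruct (Rle_dec x (c - d / 2)) as [h|h]; auto. exfalso. apply Hn. exists x. split; auto.
    lra. lra. }
  destruct Hx as [x [[Hx1 [K1 HK1]] Hx2]].
  set (x' := Rmin (c + d / 2) b).
  assert (Ex' : E x').
  { split. unfold x'. split; [apply Rmin_case; lra | apply Rmin_r].
    exists (Rmax K0 K1). intros y Hy.
    destruct (Rle_dec y x) as [h|h].
    - apply (Hmon _ K1). apply HK1. lra. apply Rmax_r.
    - apply (Hmon _ K0). apply HK0. split. lra. assert (x' <= b) by (apply Rmin_r). lra.
      assert (x' <= c + d / 2) by (apply Rmin_l). apply Rabs_def1; lra. apply Rmax_l. }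
  assert (Hx'c : x' <= c) by (apply Hc1; auto).
  assert (Hx'b : x' = b). { unfold x' in *. revert Hx'c. apply Rmin_case_strong; intros; lra. }
  destruct Ex' as [_ [K HK]]. exists K. intros y Hy. apply HK. rewrite <- Hx'b in Hy. lra.
Qed.

Definition resolvent (h : A) (m : C) : A := cinv (𝟙 ⊖ m ⊙ h).

Lemma resolvent_identity (h : A) (m n : C) :
  cinvertible (𝟙 ⊖ m ⊙ h) -> cinvertible (𝟙 ⊖ n ⊙ h) ->
  resolvent h m ⊖ resolvent h n = (m - n)%C ⊙ (resolvent h m ⊗ h ⊗ resolvent h n).
Proof.
  intros Hm Hn. destruct (cinv_spec _ Hm) as [M1 M2]. destruct (cinv_spec _ Hn) as [N1 N2].
  unfold resolvent. set (fm := cinv (𝟙 ⊖ m ⊙ h)) in *. set (fn := cinv (𝟙 ⊖ n ⊙ h)) in *.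
  assert (E : (𝟙 ⊖ n ⊙ h) ⊖ (𝟙 ⊖ m ⊙ h) = (m - n)%C ⊙ h).
  { unfold Cminus. rewrite scalDl, scalNC, oppD, oppK.
    rewrite <- addrA, (addrA (⊖ (n ⊙ h))), (addrC (⊖ (n ⊙ h))), <- addrA, addrA, addrN, add0r.
    apply addrC. }
  rewrite <- scal_mull, <- scal_mulr, <- E, mulrBr, mulrBl.
  rewrite <- (mulrA fm (𝟙 ⊖ n ⊙ h)), N1, mulr1, M2, mul1r. reflexivity.
Qed.

Lemma resolvent_lipschitz (h : A) (m n : C) :
  cinvertible (𝟙 ⊖ m ⊙ h) -> cinvertible (𝟙 ⊖ n ⊙ h) ->
  nm (resolvent h m ⊖ resolvent h n)
    <= Cmod (m - n) * nm (resolvent h m) * nm h * nm (resolvent h n).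
Proof.
  intros Hm Hn. rewrite resolvent_identity by auto. rewrite cnorm_scal.
  rewrite !Rmult_assoc. apply Rmult_le_compat_l. apply Cmod_ge_0.
  rewrite <- !Rmult_assoc. apply normM3.
Qed.

Lemma resolvent_local (h : A) (m0 m : C) : cinvertible (𝟙 ⊖ m0 ⊙ h) ->
  Cmod (m - m0) < 1 / (2 * (nm (resolvent h m0) + 1) * (nm h + 1)) ->
  nm (resolvent h m) <= 2 * nm (resolvent h m0).
Proof.
  intros H0 Hm. pose proof (norm_ge0 (resolvent h m0)). pose proof (norm_ge0 h).
  pose proof (Cmod_ge_0 (m - m0)).
  assert (E : (𝟙 ⊖ m0 ⊙ h) ⊖ ((m - m0)%C ⊙ h) = 𝟙 ⊖ m ⊙ h).
  { rewrite <- addrA, <- oppD, <- scalDl. repeat f_equal. ring. }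
  destruct (perturb_inverse (𝟙 ⊖ m0 ⊙ h) ((m - m0)%C ⊙ h) H0) as [_ [P2 _]].
  - rewrite cnorm_scal. fold (resolvent h m0).
    set (B := nm (resolvent h m0)) in *. set (c := Cmod (m - m0)) in *.
    assert (c * (2 * (B + 1) * (nm h + 1)) < 1).
    { apply (Rmult_lt_reg_r (/ (2 * (B + 1) * (nm h + 1)))). apply Rinv_0_lt_compat. nra.
      rewrite Rmult_assoc, Rinv_r by nra. lra. }
    nra.
  - rewrite E in P2. exact P2.
Qed.

Lemma lt_inv_scaled D s X : 0 < D -> 0 <= s -> X < 1 / (D * (s + 1)) -> s * X < 1 / D.
Proof.
  intros HD Hs H.
  assert (HX : X * (D * (s + 1)) < 1).
  { assert (E : 1 / (D * (s + 1)) * (D * (s + 1)) = 1) by (field; lra).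
    rewrite <- E at 2. apply Rmult_lt_compat_r; nra. }
  apply (Rmult_lt_reg_r D); auto. assert (E : 1 / D * D = 1) by (field; lra). rewrite E. nra.
Qed.

(** If 1 - m h is invertible on the closed disc of radius R, the resolvent is
    bounded there: first on each circle, then on the whole disc, by compactness
    of [0, 2 pi] and of [0, R] (polar coordinates). *)
Section ResolventBound.
Variables (h : A) (R : R).
Hypothesis HR : 0 <= R.
Hypothesis Hinv : forall m, Cmod m <= R -> cinvertible (𝟙 ⊖ m ⊙ h).

Lemma resolvent_near_polar s0 t0 m : 0 <= s0 <= R ->
  Cmod (m - polar s0 t0) < 1 / (2 * (nm (resolvent h (polar s0 t0)) + 1) * (nm h + 1)) ->
  nm (resolvent h m) <= 2 * nm (resolvent h (polar s0 t0)).
Proof. intros Hs0 Hm. apply resolvent_local; auto. apply Hinv. rewrite Cmod_polar; lra. Qed.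

Lemma resolvent_bound_circle s0 : 0 <= s0 <= R ->
  exists B, forall t, 0 <= t <= 2 * PI -> nm (resolvent h (polar s0 t)) <= B.
Proof.
  intro Hs0. pose proof PI_RGT_0. pose proof (norm_ge0 h).
  apply (interval_uniform_bound (fun t B => nm (resolvent h (polar s0 t)) <= B)).
  lra. intros; lra.
  intros t0 Ht0. pose proof (norm_ge0 (resolvent h (polar s0 t0))).
  set (B0 := nm (resolvent h (polar s0 t0))) in *.
  assert (Hp : 0 < 2 * (B0 + 1) * (nm h + 1)) by nra.
  exists (1 / ((2 * (B0 + 1) * (nm h + 1)) * (s0 + 1))). split.
  { apply Rdiv_lt_0_compat. lra. nra. }
  exists (2 * B0). intros t Ht Htt. apply resolvent_near_polar; auto.
  eapply Rle_lt_trans. apply polar_dist_angle. lra.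
  apply lt_inv_scaled; auto. lra.
Qed.

Lemma resolvent_bound :
  exists K, 0 <= K /\ forall s t, 0 <= s <= R -> 0 <= t <= 2 * PI ->
    nm (resolvent h (polar s t)) <= K.
Proof.
  pose proof (norm_ge0 h).
  destruct (interval_uniform_bound
     (fun s K => forall t, 0 <= t <= 2 * PI -> nm (resolvent h (polar s t)) <= K) 0 R)
    as [K HK]; auto.
  - intros x K K' H1 H2 t Ht. specialize (H1 t Ht). lra.
  - intros s0 Hs0. destruct (resolvent_bound_circle s0 Hs0) as [B HB].
    set (B' := Rmax B 0). assert (0 <= B') by apply Rmax_r.
    assert (HB' : forall t, 0 <= t <= 2 * PI -> nm (resolvent h (polar s0 t)) <= B')
      by (intros t Ht; eapply Rle_trans; [apply HB; auto | apply Rmax_l]).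
    exists (1 / (2 * (B' + 1) * (nm h + 1))). split.
    { apply Rdiv_lt_0_compat. lra. nra. }
    exists (2 * B'). intros s Hs Hss t Ht. specialize (HB' t Ht).
    eapply Rle_trans. apply (resolvent_near_polar s0 t). auto.
    + rewrite polar_dist_radius. eapply Rlt_le_trans. exact Hss.
      unfold Rdiv. rewrite !Rmult_1_l. pose proof (norm_ge0 (resolvent h (polar s0 t))).
      apply Rinv_le_contravar; nra.
    + lra.
  - exists (Rmax K 0). split. apply Rmax_r. intros s t Hs Ht.
    eapply Rle_trans. apply HK; auto. apply Rmax_l.
Qed.

End ResolventBound.

(** Dyadic powers and their resolvent-type inverses: for r >= 0 let
    b_n = (r h)^(2^n), D_n = (1 - b_n)^-1 and D'_n = (1 + b_n)^-1.
    The averaging identity writes D_n and D'_n as averages of R(r e^(it)) over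
    the 2^n-th roots of unity and over the interleaved rotated roots. *)

Definition root_angle (n : nat) : R := 2 * PI / INR (2 ^ n).
Definition dyadic_pow (h : A) (r : R) (n : nat) : A := apow (RtoC r ⊙ h) (2 ^ n).
Definition dyadic_res (h : A) (r : R) (n : nat) : A := cinv (𝟙 ⊖ dyadic_pow h r n).
Definition dyadic_res_plus (h : A) (r : R) (n : nat) : A := cinv (𝟙 ⊕ dyadic_pow h r n).

Lemma pow2_pos n : (1 <= 2 ^ n)%nat.
Proof. induction n as [|n IH]; simpl; lia. Qed.
Lemma INR_pow2_pos n : 0 < INR (2 ^ n).
Proof. apply lt_0_INR. pose proof (pow2_pos n). lia. Qed.
Lemma inv_INR_pow2 n : / INR (2 ^ n) = (/ 2) ^ n.
Proof. rewrite pow_INR, pow_inv. reflexivity. Qed.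

Lemma angle_range n k : (k < 2 ^ n)%nat ->
  0 <= INR k * root_angle n <= 2 * PI /\
  0 <= PI / INR (2 ^ n) + INR k * root_angle n <= 2 * PI.
Proof.
  intro Hk. pose proof PI_RGT_0. pose proof (INR_pow2_pos n) as HN.
  assert (Hk' : INR k + 1 <= INR (2 ^ n)). { rewrite <- S_INR. apply le_INR. lia. }
  pose proof (pos_INR k). unfold root_angle.
  assert (E1 : INR k * (2 * PI / INR (2 ^ n)) = 2 * PI * INR k / INR (2 ^ n))
    by (field; lra).
  assert (E2 : PI / INR (2 ^ n) + INR k * (2 * PI / INR (2 ^ n))
               = PI * (2 * INR k + 1) / INR (2 ^ n)) by (field; lra).
  rewrite E2, E1. split; split.
  - apply Rdiv_le_0_compat; nra.
  - apply (Rmult_le_reg_r (INR (2 ^ n))); auto. unfold Rdiv.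
    rewrite Rmult_assoc, Rinv_l by lra. nra.
  - apply Rdiv_le_0_compat; nra.
  - apply (Rmult_le_reg_r (INR (2 ^ n))); auto. unfold Rdiv.
    rewrite Rmult_assoc, Rinv_l by lra. nra.
Qed.

Lemma dyadic_pow_S h r n : dyadic_pow h r (S n) = dyadic_pow h r n ⊗ dyadic_pow h r n.
Proof.
  unfold dyadic_pow. change (2 ^ S n)%nat with (2 ^ n + (2 ^ n + 0))%nat.
  rewrite Nat.add_0_r. apply apow_add.
Qed.

(** 1 - b^2 = (1 - b)(1 + b), hence D_(n+1) = D_n D'_n. *)
Lemma dyadic_res_S h r n :
  cinvertible (𝟙 ⊖ dyadic_pow h r n) -> cinvertible (𝟙 ⊕ dyadic_pow h r n) ->
  dyadic_res h r (S n) = dyadic_res h r n ⊗ dyadic_res_plus h r n.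
Proof.
  intros H1 H2. destruct (cinv_spec _ H1) as [A1 A2]. destruct (cinv_spec _ H2) as [B1 B2].
  unfold dyadic_res, dyadic_res_plus in *. rewrite dyadic_pow_S.
  set (b := dyadic_pow h r n) in *.
  set (a := cinv (𝟙 ⊖ b)) in *. set (a' := cinv (𝟙 ⊕ b)) in *.
  assert (E : 𝟙 ⊖ b ⊗ b = (𝟙 ⊕ b) ⊗ (𝟙 ⊖ b)).
  { rewrite mulrBr, mulr1, mulrDl, mul1r, <- addrA. f_equal.
    rewrite oppD, addrA, addrN, add0r. reflexivity. }
  apply cinv_eq.
  - rewrite E, <- mulrA, (mulrA (𝟙 ⊖ b)), A1, mul1r. exact B1.
  - rewrite E, mulrA, <- (mulrA a a'), B2, mulr1. exact A2.
Qed.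

Lemma dyadic_res_0 h n : dyadic_res h 0 n = 𝟙.
Proof.
  unfold dyadic_res, dyadic_pow. rewrite scal0. pose proof (pow2_pos n).
  destruct (2 ^ n)%nat as [|m]. lia. simpl. rewrite mul0r, sub0r. apply cinv1.
Qed.

Lemma idempotent_near_1 (p : A) : p ⊗ p = p -> nm (𝟙 ⊖ p) < 1 -> p = 𝟙.
Proof.
  intros Hp Hn. set (q := 𝟙 ⊖ p) in *.
  assert (Hq : q ⊗ q = q).
  { unfold q. rewrite mulrBl, mul1r, mulrBr, mulr1, Hp, addrN, sub0r. reflexivity. }
  assert (nm q <= nm q * nm q) by (rewrite <- Hq at 1; apply normM).
  pose proof (norm_ge0 q). assert (Hq0 : nm q = 0) by nra.
  symmetry. apply normB_eq0, Hq0.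
Qed.

Lemma half_sum_sub (x y : A) : RtoC (1 / 2) ⊙ (x ⊕ y) ⊖ x = RtoC (1 / 2) ⊙ (y ⊖ x).
Proof.
  assert (Ex : x = RtoC (1 / 2) ⊙ x ⊕ RtoC (1 / 2) ⊙ x).
  { rewrite <- scalDl. replace (RtoC (1 / 2) + RtoC (1 / 2))%C with (RtoC 1)
      by (apply injective_projections; simpl; field).
    symmetry; apply cscal_1. }
  rewrite scalDr, scalDr, scalN. rewrite Ex at 2.
  rewrite oppD, (addrC (RtoC (1 / 2) ⊙ x)), <- !addrA. f_equal. f_equal.
  rewrite addrA, addrN, add0r. reflexivity.
Qed.

Section Dyadic.
Variable h : A.
Variable R0 : R.
Hypothesis HR0 : 0 <= R0.
Hypothesis Hinv : forall m, Cmod m <= R0 -> cinvertible (𝟙 ⊖ m ⊙ h).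

Lemma invertible_polar s t : 0 <= s <= R0 -> cinvertible (𝟙 ⊖ polar s t ⊙ h).
Proof. intro Hs. apply Hinv. rewrite Cmod_polar; lra. Qed.

Lemma dyadic_res_average r n : 0 <= r <= R0 ->
  cinvertible (𝟙 ⊖ dyadic_pow h r n) /\
  dyadic_res h r n
    = average (2 ^ n) (fun k => resolvent h (polar r (INR k * root_angle n))).
Proof.
  intro Hr.
  assert (E : forall k, cis (INR k * (2 * PI / INR (2 ^ n))) ⊙ (RtoC r ⊙ h)
                        = polar r (INR k * root_angle n) ⊙ h).
  { intro k. rewrite <- scalA. f_equal. unfold polar, root_angle. ring. }
  destruct (average_identity (RtoC r ⊙ h) (2 ^ n) (pow2_pos n)) as [H1 H2].
  { intros k Hk. rewrite E. apply invertible_polar; lra. }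
  split. exact H1. unfold dyadic_res, dyadic_pow. rewrite H2. unfold average. f_equal.
  apply asum_ext. intros k Hk. unfold resolvent. rewrite E. reflexivity.
Qed.

Lemma dyadic_res_plus_average r n : 0 <= r <= R0 ->
  cinvertible (𝟙 ⊕ dyadic_pow h r n) /\
  dyadic_res_plus h r n
    = average (2 ^ n)
        (fun k => resolvent h (polar r (PI / INR (2 ^ n) + INR k * root_angle n))).
Proof.
  intro Hr. pose proof (INR_pow2_pos n) as HN.
  set (z := polar r (PI / INR (2 ^ n)) ⊙ h).
  assert (E : forall k, cis (INR k * (2 * PI / INR (2 ^ n))) ⊙ z
                        = polar r (PI / INR (2 ^ n) + INR k * root_angle n) ⊙ h).
  { intro k. unfold z. rewrite <- scalA. f_equal. unfold polar, root_angle.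
    rewrite cis_add. ring. }
  assert (Ez : apow z (2 ^ n) = ⊖ dyadic_pow h r n).
  { unfold z, dyadic_pow.
    replace (polar r (PI / INR (2 ^ n))) with (cis (PI / INR (2 ^ n)) * RtoC r)%C
      by (unfold polar; ring).
    rewrite scalA, apow_scal, cis_pow.
    replace (INR (2 ^ n) * (PI / INR (2 ^ n))) with PI by (field; lra).
    rewrite cis_PI, scalN1. reflexivity. }
  destruct (average_identity z (2 ^ n) (pow2_pos n)) as [H1 H2].
  { intros k Hk. rewrite E. apply invertible_polar; lra. }
  rewrite Ez, oppK in H1, H2.
  split. exact H1. unfold dyadic_res_plus. rewrite H2. unfold average. f_equal.
  apply asum_ext. intros k Hk. unfold resolvent. rewrite E. reflexivity.
Qed.

(** Splitting the 2^(n+1)-th roots into even and odd ones: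
    D_(n+1) = (D_n + D'_n) / 2. *)
Lemma dyadic_res_half r n : 0 <= r <= R0 ->
  dyadic_res h r (S n) = RtoC (1 / 2) ⊙ (dyadic_res h r n ⊕ dyadic_res_plus h r n).
Proof.
  intro Hr. pose proof (INR_pow2_pos n) as HN.
  rewrite (proj2 (dyadic_res_average r (S n) Hr)), (proj2 (dyadic_res_average r n Hr)),
    (proj2 (dyadic_res_plus_average r n Hr)).
  unfold average. change (2 ^ S n)%nat with (2 * 2 ^ n)%nat. rewrite asum_split.
  rewrite (scalDr (RtoC (1 / 2))), <- !scalA, <- !RtoC_mult.
  replace (1 / 2 * / INR (2 ^ n)) with (/ INR (2 * 2 ^ n))
    by (rewrite mult_INR; change (INR 2) with 2; field; lra).
  rewrite scalDr. f_equal; f_equal.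
  - apply asum_ext. intros k Hk. unfold root_angle. f_equal. f_equal.
    change (2 ^ S n)%nat with (2 * 2 ^ n)%nat.
    rewrite !mult_INR. change (INR 2) with 2. field. lra.
  - apply asum_ext. intros k Hk. unfold root_angle. f_equal. f_equal.
    change (2 ^ S n)%nat with (2 * 2 ^ n)%nat.
    rewrite plus_INR, !mult_INR. change (INR 2) with 2. change (INR 1) with 1. field. lra.
Qed.

Variable K : R.
Hypothesis HK0 : 0 <= K.
Hypothesis HK : forall s t, 0 <= s <= R0 -> 0 <= t <= 2 * PI ->
  nm (resolvent h (polar s t)) <= K.

Lemma dyadic_res_norm r n : 0 <= r <= R0 -> nm (dyadic_res h r n) <= K.
Proof.
  intro Hr. rewrite (proj2 (dyadic_res_average r n Hr)). apply average_norm. apply pow2_pos.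
  intros k Hk. destruct (angle_range n k Hk). apply HK; auto.
Qed.

(** The two averages sample the resolvent at angles pi / 2^n apart. *)
Lemma dyadic_res_plus_close r n : 0 <= r <= R0 ->
  nm (dyadic_res_plus h r n ⊖ dyadic_res h r n) <= K * K * nm h * r * (PI / INR (2 ^ n)).
Proof.
  intro Hr. pose proof (INR_pow2_pos n) as HN. pose proof PI_RGT_0. pose proof (norm_ge0 h).
  rewrite (proj2 (dyadic_res_average r n Hr)), (proj2 (dyadic_res_plus_average r n Hr)).
  rewrite average_sub. apply average_norm. apply pow2_pos. intros k Hk.
  destruct (angle_range n k Hk) as [R1 R2].
  eapply Rle_trans. apply resolvent_lipschitz; apply invertible_polar; auto.
  pose proof (polar_dist_angle r (PI / INR (2 ^ n) + INR k * root_angle n)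
                (INR k * root_angle n) (proj1 Hr)) as D.
  replace (PI / INR (2 ^ n) + INR k * root_angle n - INR k * root_angle n)
    with (PI / INR (2 ^ n)) in D by ring.
  rewrite Rabs_right in D by (apply Rle_ge, Rlt_le, Rdiv_lt_0_compat; lra).
  replace (K * K * nm h * r * (PI / INR (2 ^ n)))
    with ((r * (PI / INR (2 ^ n))) * K * nm h * K) by ring.
  apply prod4_le; auto; split; try apply Cmod_ge_0; try apply norm_ge0; auto; apply HK; auto.
Qed.

Lemma dyadic_res_lipschitz r s n : 0 <= r <= R0 -> 0 <= s <= R0 ->
  nm (dyadic_res h r n ⊖ dyadic_res h s n) <= K * K * nm h * Rabs (r - s).
Proof.
  intros Hr Hs. pose proof (norm_ge0 h).
  rewrite (proj2 (dyadic_res_average r n Hr)), (proj2 (dyadic_res_average s n Hs)).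
  rewrite average_sub. apply average_norm. apply pow2_pos. intros k Hk.
  destruct (angle_range n k Hk) as [R1 R2].
  eapply Rle_trans. apply resolvent_lipschitz; apply invertible_polar; auto.
  rewrite polar_dist_radius.
  replace (K * K * nm h * Rabs (r - s)) with (Rabs (r - s) * K * nm h * K) by ring.
  apply prod4_le; auto; split; try apply Rabs_pos; try apply norm_ge0; auto; try lra;
    apply HK; auto.
Qed.

(** D_n converges (its increments are halved at each step) to an idempotent:
    D'_n has the same limit L and D_(n+1) = D_n D'_n gives L = L L. *)
Lemma dyadic_res_limit r : 0 <= r <= R0 -> exists L, cv (dyadic_res h r) L /\ L ⊗ L = L.
Proof.
  intro Hr. pose proof (norm_ge0 h). pose proof PI_RGT_0.
  set (M := K * K * nm h * r * PI).
  assert (HM : 0 <= M).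
  { unfold M. destruct Hr. apply Rmult_le_pos; [|lra]. repeat apply Rmult_le_pos; lra. }
  assert (Hclose : forall n, nm (dyadic_res_plus h r n ⊖ dyadic_res h r n) <= M * (/ 2) ^ n).
  { intro n. pose proof (dyadic_res_plus_close r n Hr) as D.
    unfold Rdiv in D. rewrite inv_INR_pow2 in D. unfold M. lra. }
  assert (Hstep : forall n, nm (dyadic_res h r (S n) ⊖ dyadic_res h r n) <= M / 2 * (/ 2) ^ n).
  { intro n. rewrite (dyadic_res_half r n Hr), half_sum_sub, normscalR.
    rewrite Rabs_right by lra. specialize (Hclose n). lra. }
  destruct (cauchy_geometric _ (M / 2) (/ 2) ltac:(lra) ltac:(lra) Hstep) as [L HL].
  exists L. split; auto.
  assert (HL' : cv (dyadic_res_plus h r) L).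
  { apply (cv_close (dyadic_res h r)); auto.
    apply (cv_geometric _ _ M (/ 2)). lra. intro n. rewrite sub0r. apply Hclose. }
  assert (H1 : cv (fun n => dyadic_res h r (S n)) (L ⊗ L)).
  { eapply cv_ext. 2: apply (cv_mul _ _ L L K HL HL').
    - intro n. symmetry. apply dyadic_res_S.
      apply (proj1 (dyadic_res_average r n Hr)). apply (proj1 (dyadic_res_plus_average r n Hr)).
    - intro n. apply (dyadic_res_norm r n Hr). }
  symmetry. exact (cv_uniq _ _ _ (cv_shift _ _ HL) H1).
Qed.

(** The limit is 1 for every r in [0, R0]: it is 1 at r = 0, and the limits
    at radii closer than 1 / (2 K^2 ||h|| + 2) are idempotents within distance
    < 1 of each other, so 1 propagates along [0, R0]. *)
Lemma dyadic_res_to_1 r : 0 <= r <= R0 -> cv (dyadic_res h r) 𝟙.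
Proof.
  intro Hr. pose proof (norm_ge0 h).
  set (C0 := K * K * nm h).
  assert (HC : 0 <= C0) by (unfold C0; repeat apply Rmult_le_pos; auto).
  set (d := 1 / (2 * (C0 + 1))).
  assert (Hd : 0 < d) by (unfold d; apply Rdiv_lt_0_compat; lra).
  assert (HCd : C0 * d < 1)
    by (unfold d; apply (Rmult_lt_reg_r (2 * (C0 + 1))); [lra|]; field_simplify; lra).
  assert (Hm : forall m r, 0 <= r <= R0 -> r <= INR m * d -> cv (dyadic_res h r) 𝟙).
  { induction m as [|m IH]; intros r0 Hr0 Hrm.
    - simpl in Hrm. replace r0 with 0 by lra.
      apply (cv_ext (fun _ => 𝟙)). intro n. symmetry. apply dyadic_res_0. apply cv_const.
    - set (s := Rmax 0 (r0 - d)).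
      assert (Hs : 0 <= s <= R0) by (unfold s; split; [apply Rmax_l | apply Rmax_lub; lra]).
      assert (Hsm : s <= INR m * d).
      { unfold s. rewrite S_INR in Hrm. apply Rmax_lub. pose proof (pos_INR m). nra. lra. }
      specialize (IH s Hs Hsm).
      destruct (dyadic_res_limit r0 Hr0) as [L [HL HLL]].
      assert (Hdist : nm (𝟙 ⊖ L) <= C0 * d).
      { apply (cv_norm_le (fun n => dyadic_res h s n ⊖ dyadic_res h r0 n)).
        apply cv_sub; auto.
        intro n. eapply Rle_trans. apply (dyadic_res_lipschitz s r0 n Hs Hr0). fold C0.
        apply Rmult_le_compat_l; auto. unfold s.
        apply Rmax_case_strong; intro; apply Rabs_le; lra. }
      assert (L = 𝟙) by (apply idempotent_near_1; auto; lra). subst L. auto. }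
  destruct (INR_archimed d R0 Hd) as [m Hmd].
  apply (Hm m r Hr). lra.
Qed.

End Dyadic.

Lemma apow_selfadj (h : A) m : h⋆ = h -> (apow h m)⋆ = apow h m.
Proof.
  intro Hs. induction m as [|m IH]; simpl. apply star1.
  rewrite starM, IH, Hs. symmetry. apply apow_Sr.
Qed.

Lemma apow2_norm (h : A) n : h⋆ = h -> nm (apow h (2 ^ n)) = nm h ^ (2 ^ n).
Proof.
  intro Hs. induction n as [|n IH]. simpl. rewrite mulr1. ring.
  change (2 ^ S n)%nat with (2 ^ n + (2 ^ n + 0))%nat.
  rewrite Nat.add_0_r, apow_add, pow_add, <- IH.
  rewrite <- (apow_selfadj h (2 ^ n) Hs) at 1. apply cstar_identity.
Qed.

(** Gelfand-type bound: if h is self-adjoint and 1 - m h is invertible for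
    |m| <= R0, then R0 ||h|| <= 1.  Indeed D_N is eventually close to 1, which
    forces ||(R0 h)^(2^N)|| = (R0 ||h||)^(2^N) < 1. *)
Lemma selfadj_resolvent_radius (h : A) (R0 : R) : h⋆ = h -> 0 <= R0 ->
  (forall m, Cmod m <= R0 -> cinvertible (𝟙 ⊖ m ⊙ h)) -> R0 * nm h <= 1.
Proof.
  intros Hs HR0 Hinv.
  destruct (resolvent_bound h R0 HR0 Hinv) as [K [HK0 HK]].
  pose proof (dyadic_res_to_1 h R0 HR0 Hinv K HK0 HK R0 (conj HR0 (Rle_refl R0))) as Hc.
  destruct (Hc (1 / 4) ltac:(lra)) as [N HN]. specialize (HN N (le_n N)).
  destruct (dyadic_res_average h R0 Hinv R0 N (conj HR0 (Rle_refl R0))) as [Hi _].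
  destruct (cinv_spec _ Hi) as [I1 I2]. fold (dyadic_res h R0 N) in I1, I2.
  pose proof norm1_le. pose proof (norm_ge0 𝟙).
  destruct (perturb_inverse 𝟙 (𝟙 ⊖ dyadic_res h R0 N) invertible_1) as [_ [_ P3]].
  { rewrite cinv1, normB_sym. nra. }
  rewrite subsubK, (cinv_eq _ _ I2 I1), cinv1, subKl, normN in P3.
  assert (Hb : nm (dyadic_pow h R0 N) < 1).
  { eapply Rle_lt_trans. exact P3. rewrite normB_sym. simpl. nra. }
  unfold dyadic_pow in Hb.
  rewrite apow_scal, <- RtoC_pow, normscalR, apow2_norm, Rabs_right, <- Rpow_mult_distr in Hb
    by (auto; apply Rle_ge, pow_le; auto).
  destruct (Rle_dec (R0 * nm h) 1) as [h1|h1]; auto.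
  pose proof (pow_R1_Rle (R0 * nm h) (2 ^ N) ltac:(lra)). lra.
Qed.

(** The norm of a self-adjoint element is at most any bound t on the moduli
    of its spectrum: for |m| <= R0 := 2 / (||h|| + t) the element 1 - m h is
    invertible (it is a multiple of h - 1/m, and |1/m| > t), so the Gelfand-type
    bound gives 2 ||h|| <= ||h|| + t. *)
Lemma selfadj_norm_le (h : A) (t : R) : h⋆ = h -> 0 <= t ->
  (forall l, spectrum h l -> Cmod l <= t) -> nm h <= t.
Proof.
  intros Hs Ht Hsp. destruct (Rle_dec (nm h) t) as [H|H]; auto. exfalso.
  apply Rnot_le_lt in H.
  set (R0 := 2 / (nm h + t)).
  assert (HR0 : 0 < R0) by (unfold R0; apply Rdiv_lt_0_compat; lra).
  assert (Hinv : forall m, Cmod m <= R0 -> cinvertible (𝟙 ⊖ m ⊙ h)).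
  { intros m Hm. destruct (classic (m = RtoC 0)) as [E|E].
    - subst m. rewrite scal0, sub0r. apply invertible_1.
    - assert (Eq : 𝟙 ⊖ m ⊙ h = (- m)%C ⊙ (h ⊖ sc (/ m)%C)).
      { rewrite scalDr, scalN, scalNC. unfold sc. rewrite scalNC, oppK, <- scalA.
        replace (m * / m)%C with (RtoC 1) by (field; auto). rewrite cscal_1. apply addrC. }
      rewrite Eq. apply scal_invertible.
      + intro E2. apply E. replace m with (- (- m))%C by ring. rewrite E2. ceqr.
      + apply NNPP. intro Hn. apply Hsp in Hn. rewrite Cmod_inv in Hn by auto.
        pose proof (Cmod_ge_0 m).
        assert (Hm0 : 0 < Cmod m).
        { destruct (Rle_lt_or_eq_dec 0 (Cmod m)) as [h1|h1]; auto.
          exfalso. apply E. apply Cmod_eq_0. auto. }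
        assert (/ R0 <= / Cmod m) by (apply Rinv_le_contravar; auto).
        unfold R0 in H1. rewrite Rinv_div in H1. lra. }
  pose proof (selfadj_resolvent_radius h R0 Hs (Rlt_le _ _ HR0) Hinv) as HG.
  unfold R0 in HG. assert (2 * nm h <= nm h + t).
  { apply (Rmult_le_reg_r (/ (nm h + t))). apply Rinv_0_lt_compat. lra.
    rewrite Rinv_r by lra. unfold Rdiv in HG. lra. }
  lra.
Qed.

Lemma cpos_spectrum (p : A) l : cpos p -> spectrum p l -> snd l = 0 /\ 0 <= fst l.
Proof. intros [_ H] Hs. apply H. exact Hs. Qed.

Lemma cpos_mk (p : A) :
  p⋆ = p -> (forall l, spectrum p l -> snd l = 0 /\ 0 <= fst l) -> cpos p.
Proof. intros H1 H2. split; auto. Qed.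

Lemma cle_pos (p : A) : cle 𝟘 p -> cpos p.
Proof. unfold cle, csub. rewrite sub0r. auto. Qed.

(** For positive p and s >= ||p||, the element s - p has spectrum in [0, s],
    hence norm at most s. *)
Lemma pos_compl_norm (p : A) (s : R) : cpos p -> nm p <= s -> nm (sc (RtoC s) ⊖ p) <= s.
Proof.
  intros Hp Hps. pose proof (norm_ge0 p).
  apply selfadj_norm_le. apply selfadj_sub. apply selfadj_sc. apply Hp. lra.
  intros l Hl. apply spectrum_reflect' in Hl.
  destruct (cpos_spectrum p _ Hp Hl) as [I R].
  pose proof (spectrum_norm p _ Hl) as B.
  rewrite Cmod_real in B by auto. destruct l as [a b]. simpl in I, R, B.
  rewrite Cmod_real by (simpl; lra). simpl. apply Rabs_le.
  apply Rabs_le_between in B. lra.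
Qed.

(** The positive cone is closed under addition: (s + t) - (p + q) has norm at
    most s + t, which pins the (real) spectrum of p + q to [0, 2 (s + t)]. *)
Lemma sum_pos (p q : A) : cpos p -> cpos q -> cpos (p ⊕ q).
Proof.
  intros Hp Hq. set (s := nm p). set (t := nm q).
  pose proof (pos_compl_norm p s Hp (Rle_refl _)) as B1.
  pose proof (pos_compl_norm q t Hq (Rle_refl _)) as B2.
  pose proof (norm_ge0 p). pose proof (norm_ge0 q).
  assert (E : sc (RtoC (s + t)) ⊖ (p ⊕ q) = (sc (RtoC s) ⊖ p) ⊕ (sc (RtoC t) ⊖ q)).
  { rewrite RtoC_plus, scD, oppD. apply addrACA. }
  assert (HS : (p ⊕ q)⋆ = p ⊕ q) by (apply selfadj_add; [apply Hp | apply Hq]).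
  apply cpos_mk; auto. intros l Hl.
  pose proof (selfadj_spectrum_real _ l HS Hl) as Hre.
  pose proof (spectrum_norm _ _ (spectrum_reflect _ (RtoC (s + t)) l Hl)) as B.
  rewrite E in B.
  assert (nm ((sc (RtoC s) ⊖ p) ⊕ (sc (RtoC t) ⊖ q)) <= s + t)
    by (eapply Rle_trans; [apply normD | lra]).
  rewrite Cmod_real in B by (destruct l; simpl in *; lra).
  destruct l as [a b]. simpl in *. split; auto.
  apply Rabs_le_between in B. lra.
Qed.

Lemma cle_trans (a b c : A) : cle a b -> cle b c -> cle a c.
Proof.
  unfold cle, csub. intros H1 H2. rewrite <- (sub_chain c b a). apply sum_pos; auto.
Qed.

Lemma cle_add (a b c d : A) : cle a b -> cle c d -> cle (a ⊕ c) (b ⊕ d).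
Proof.
  unfold cle, csub. intros H1 H2.
  replace (b ⊕ d ⊖ (a ⊕ c)) with ((b ⊖ a) ⊕ (d ⊖ c)) by (rewrite oppD; apply addrACA).
  apply sum_pos; auto.
Qed.

Lemma sc_pos (r : R) : 0 <= r -> cpos (sc (RtoC r)).
Proof.
  intro Hr. apply cpos_mk. apply selfadj_sc.
  intros l Hl. destruct (classic (RtoC r - l = RtoC 0)%C) as [E|E].
  - assert (l = RtoC r) by (rewrite <- (Cplus_0_l l), <- E; ring). subst. simpl. split; lra.
  - exfalso. apply Hl. rewrite scB. unfold sc. apply scal_invertible; auto.
    apply invertible_1.
Qed.

Lemma cle_sc (a b : R) : a <= b -> cle (sc (RtoC a)) (sc (RtoC b)).
Proof.
  intro H. unfold cle, csub. rewrite scB, <- RtoC_minus. apply sc_pos. lra.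
Qed.

Lemma pos_le_norm (p : A) : cpos p -> cle p (sc (RtoC (nm p))).
Proof.
  intro Hp. unfold cle, csub. pose proof (norm_ge0 p).
  apply cpos_mk. apply selfadj_sub. apply selfadj_sc. apply Hp.
  intros l Hl. apply spectrum_reflect' in Hl.
  destruct (cpos_spectrum p _ Hp Hl) as [I R]. pose proof (spectrum_norm _ _ Hl) as B.
  rewrite Cmod_real in B by auto.
  destruct l as [a b]. simpl in *. split. lra. apply Rabs_le_between in B. lra.
Qed.

Lemma norm_le_sc (p : A) (c : R) : cpos p -> 0 <= c -> cle p (sc (RtoC c)) -> nm p <= c.
Proof.
  unfold cle, csub. intros Hp Hc Hpc. apply selfadj_norm_le; auto. apply Hp.
  intros l Hl. destruct (cpos_spectrum p _ Hp Hl) as [I R].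
  destruct (cpos_spectrum _ _ Hpc (spectrum_reflect _ (RtoC c) l Hl)) as [_ R2].
  rewrite Cmod_real by auto. destruct l as [a b]. simpl in *. apply Rabs_le. lra.
Qed.

Lemma norm_mono (p q : A) : cle 𝟘 p -> cle p q -> nm p <= nm q.
Proof.
  intros H1 H2. apply cle_pos in H1.
  assert (Hq : cpos q).
  { replace q with (p ⊕ (q ⊖ p)) by (rewrite addrC, addrNK; reflexivity).
    apply sum_pos; auto. }
  apply norm_le_sc; auto. apply norm_ge0.
  eapply cle_trans. exact H2. apply pos_le_norm; auto.
Qed.

(** A strictly positive element dominates a positive multiple of the unit:
    its spectrum avoids (-dl, dl) for dl small compared to 1 / ||e^-1||. *)
Lemma strictly_pos_lower_bound (ep : A) : cgt0 ep ->
  exists dl, 0 < dl /\ cle (sc (RtoC dl)) ep.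
Proof.
  intros [Hp Hi]. pose proof (norm_ge0 (cinv ep)). set (M := nm (cinv ep)) in *.
  set (dl := 1 / (2 * (M + 1))).
  assert (Hd : 0 < dl) by (apply Rdiv_lt_0_compat; lra).
  assert (Hm : M * dl <= 1 / 2).
  { unfold dl, Rdiv. rewrite Rmult_1_l. apply (Rmult_le_reg_r (2 * (M + 1))). lra.
    rewrite Rmult_assoc, Rinv_l by lra. lra. }
  exists dl. split. exact Hd.
  unfold cle, csub. apply cpos_mk. apply selfadj_sub. apply Hp. apply selfadj_sc.
  intros l Hl. apply spectrum_shift in Hl.
  destruct (cpos_spectrum _ _ Hp Hl) as [I R]. destruct l as [a b]. simpl in *.
  split. lra.
  destruct (Rle_dec 0 a) as [h|h]; auto. exfalso. apply Hl.
  replace (sc ((a, b) + RtoC dl)%C) with (sc (RtoC (a + dl)))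
    by (f_equal; apply injective_projections; simpl; lra).
  apply (perturb_inverse ep (sc (RtoC (a + dl)))); auto.
  eapply Rle_trans. apply Rmult_le_compat_r. apply norm_ge0. apply norm_sc.
  rewrite Cmod_R, Rabs_right by lra. fold M.
  assert ((a + dl) * M <= dl * M) by (apply Rmult_le_compat_r; lra).
  lra.
Qed.


Lemma norm_conj (a0 y : A) : nm (a0⋆ ⊗ y ⊗ a0) <= nm a0 * nm a0 * nm y.
Proof.
  eapply Rle_trans. apply normM3. rewrite norm_star.
  pose proof (norm_ge0 a0). pose proof (norm_ge0 y). right. ring.
Qed.

Lemma geom_rsum (q D0 : R) p n : q <> 1 ->
  rsum (fun i => q ^ (p + i) * D0) n = q ^ p * D0 * (1 - q ^ n) / (1 - q).
Proof.
  intro Hq. assert (1 - q <> 0) by lra.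
  induction n as [|n IH]; simpl rsum. simpl. field; auto.
  rewrite IH, pow_add. simpl. field; auto.
Qed.

Section Orbit.
Variables (X : Type) (d : X -> X -> A) (T : X -> X) (x : X) (a : A).
Hypothesis Hd : asym_metric A d.
Hypothesis Ha : nm a < 1.
Hypothesis Hcontr : forall y, orbit T x y ->
  cle (d (T y) (T (T y))) (cmul A (cmul A (cstar A a) (d y (T y))) a).

Definition orbit_step (n : nat) : A := d (Nat.iter n T x) (Nat.iter (S n) T x).
Definition ratio : R := nm a * nm a.

Lemma ratio_range : 0 <= ratio < 1.
Proof. unfold ratio. pose proof (norm_ge0 a). split; nra. Qed.

Lemma orbit_step_decay n : nm (orbit_step n) <= ratio ^ n * nm (orbit_step O).
Proof.
  destruct Hd as [Hpos _]. induction n as [|n IH].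
  { rewrite pow_O, Rmult_1_l. apply Rle_refl. }
  pose proof (norm_mono _ _ (Hpos _ _) (Hcontr _ (ex_intro _ n eq_refl))) as Hm.
  pose proof (norm_conj a (orbit_step n)) as Hn.
  change (d (T (Nat.iter n T x)) (T (T (Nat.iter n T x)))) with (orbit_step (S n)) in Hm.
  change (d (Nat.iter n T x) (T (Nat.iter n T x))) with (orbit_step n) in Hm.
  fold ratio in Hn. simpl pow. pose proof (norm_ge0 (orbit_step n)). pose proof ratio_range.
  assert (ratio * nm (orbit_step n) <= ratio * (ratio ^ n * nm (orbit_step O)))
    by (apply Rmult_le_compat_l; lra).
  lra.
Qed.

Lemma orbit_chain p k :
  cle (d (Nat.iter p T x) (Nat.iter (S (p + k)) T x))
      (sc (RtoC (rsum (fun i => nm (orbit_step (p + i))) (S k)))).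
Proof.
  destruct Hd as [Hpos [_ Htri]]. induction k as [|k IH].
  - simpl rsum. rewrite Rplus_0_l, Nat.add_0_r. apply pos_le_norm, cle_pos, Hpos.
  - rewrite Nat.add_succ_r. eapply cle_trans. apply (Htri _ _ (Nat.iter (S (p + k)) T x)).
    simpl rsum. rewrite RtoC_plus, scD. apply cle_add. exact IH.
    rewrite Nat.add_succ_r. apply pos_le_norm, cle_pos, Hpos.
Qed.

Lemma orbit_dist_bound p n : (p < n)%nat ->
  cle (d (Nat.iter p T x) (Nat.iter n T x))
      (sc (RtoC (ratio ^ p * nm (orbit_step O) / (1 - ratio)))).
Proof.
  intro Hpn. pose proof ratio_range as Hq. pose proof (norm_ge0 (orbit_step O)).
  replace n with (S (p + (n - p - 1))) by lia.
  eapply cle_trans. apply orbit_chain. apply cle_sc.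
  eapply Rle_trans. apply rsum_le. intros i _. apply (orbit_step_decay (p + i)).
  rewrite geom_rsum by lra.
  pose proof (pow_le ratio (S (n - p - 1)) (proj1 Hq)). pose proof (pow_le ratio p (proj1 Hq)).
  unfold Rdiv. apply Rmult_le_compat_r. apply Rlt_le, Rinv_0_lt_compat. lra.
  assert (0 <= ratio ^ p * nm (orbit_step O)) by (apply Rmult_le_pos; lra). nra.
Qed.

(** The orbit is forward Cauchy: its distances are eventually below dl times
    the unit, which in turn lies below any strictly positive element. *)
Lemma orbit_forward_cauchy : forward_cauchy d (fun n => Nat.iter n T x).
Proof.
  intros ep Hep. destruct (strictly_pos_lower_bound ep Hep) as [dl [Hdl Hle]].
  pose proof ratio_range as Hq. set (D0 := nm (orbit_step O)).
  assert (HD0 : 0 <= D0) by apply norm_ge0.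
  destruct (pow_small ratio Hq (dl * (1 - ratio) / (D0 + 1))) as [N HN].
  { apply Rdiv_lt_0_compat; [apply Rmult_lt_0_compat|]; lra. }
  exists N. intros n p Hp Hpn.
  eapply cle_trans. apply (orbit_dist_bound p n Hpn).
  eapply cle_trans. 2: exact Hle. apply cle_sc.
  specialize (HN p Hp). fold D0.
  apply (Rmult_le_reg_r (1 - ratio)). lra.
  unfold Rdiv. rewrite Rmult_assoc, Rinv_l, Rmult_1_r by lra.
  assert (ratio ^ p * D0 <= dl * (1 - ratio) / (D0 + 1) * D0)
    by (apply Rmult_le_compat_r; lra).
  assert (dl * (1 - ratio) / (D0 + 1) * D0 <= dl * (1 - ratio)).
  { replace (dl * (1 - ratio) / (D0 + 1) * D0) with (dl * (1 - ratio) * (1 - 1 / (D0 + 1)))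
      by (field; lra).
    assert (0 < 1 / (D0 + 1)) by (apply Rdiv_lt_0_compat; lra).
    assert (0 < dl * (1 - ratio)) by (apply Rmult_lt_0_compat; lra). nra. }
  lra.
Qed.

Lemma orbit_G_liminf :
  Rbar_le (LimInf_seq (fun n => nm (d (Nat.iter n T x) (T (Nat.iter n T x))))) (Finite 0).
Proof.
  pose proof ratio_range as Hq.
  assert (H1 : Rbar_le (LimInf_seq (fun n => nm (d (Nat.iter n T x) (T (Nat.iter n T x)))))
                       (LimInf_seq (fun n => ratio ^ n * nm (orbit_step O)))).
  { apply LimInf_le. exists O. intros n _. apply orbit_step_decay. }
  replace (Finite 0) with (LimInf_seq (fun n => ratio ^ n * nm (orbit_step O))). exact H1.
  apply is_LimInf_seq_unique. apply is_lim_LimInf_seq.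
  replace (Finite 0) with (Rbar_mult (Finite 0) (Finite (nm (orbit_step O))))
    by (simpl; f_equal; ring).
  apply is_lim_seq_scal_r. apply is_lim_seq_geom. rewrite Rabs_right; lra.
Qed.

(** At a limit x0 of the orbit, x0 is fixed iff G is forward T-orbitally lower
    semicontinuous at x0: a fixed point has G(x0) = 0, and conversely lower
    semicontinuity along the orbit itself forces ||G(x0)|| <= 0. *)
Lemma fixed_point_iff_lsc x0 : forward_conv d (fun n => Nat.iter n T x) x0 ->
  (T x0 = x0 <-> forward_orbitally_lsc d T x (fun z => d z (T z)) x0).
Proof.
  destruct Hd as [_ [Heq _]]. intro Hx0. split.
  - intros HT u Hu Hcv. rewrite HT, (proj2 (Heq x0 x0) eq_refl), norm0.
    pose proof (LimInf_le (fun _ => 0) (fun n => nm (d (u n) (T (u n))))) as H.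
    rewrite LimInf_seq_const in H. apply H. exists O. intros n _. apply norm_ge0.
  - intro Hl. specialize (Hl _ (fun n => ex_intro _ n eq_refl) Hx0).
    pose proof (Rbar_le_trans _ _ _ Hl orbit_G_liminf) as H. simpl in H.
    pose proof (norm_ge0 (d x0 (T x0))).
    symmetry. apply Heq, norm_eq0. lra.
Qed.

End Orbit.
End CStar.

Theorem mainTheorem3 (A : CStarAlgebra) (X : Type) (d : X -> X -> A) (T : X -> X)
  (x : X) (a : A)
  (Hd : asym_metric A d)
  (Hcomplete : forward_complete d)
  (Ha : cnorm A a < 1)
  (Hcontr : forall y, orbit T x y ->
     cle (d (T y) (T (T y))) (cmul A (cmul A (cstar A a) (d y (T y))) a)) :
  exists x0 : X,
    forward_conv d (fun n => Nat.iter n T x) x0 /\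
    (T x0 = x0 <-> forward_orbitally_lsc d T x (fun z => d z (T z)) x0).
Proof.
  destruct (Hcomplete _ (orbit_forward_cauchy A X d T x a Hd Ha Hcontr)) as [x0 Hx0].
  exists x0. split.
  - exact Hx0.
  - exact (fixed_point_iff_lsc A X d T x a Hd Ha Hcontr x0 Hx0).
Qed.
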